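(* Let $c=(c_1,c_2)$ be a differentiable map defined for $x\in\mathbb{R}$, $y>0$ (at least near the line $x=1/2$) such that $c(\tfrac12,y)=a(\tfrac12,y)$ for all $y$, $c_1(x,y)+x\,c_2(x,y)=\tfrac12$ for all $(x,y)$, and $\partial_xc_2(\tfrac12,y)=0$ for all $y$. Then for every fixed $\alpha>0$ the functions $(x,y)\mapsto\theta_{(x,y)}(c(x,y);\alpha)$ and $(x,y)\mapsto\widehat\theta_{(x,y)}(c(x,y);\alpha)$ have vanishing gradient at $(x,y)=(1/2,\sqrt3/2)$.
   Context: For $y>0$, $c=(c_1,c_2)\in\mathbb{R}^2$, $\alpha>0$: $\theta_{(x,y)}(c;\alpha)=\sum_{k,l\in\mathbb{Z}}\exp(-\tfrac{\pi\alpha}{y}((k+c_1)^2+2x(k+c_1)(l+c_2)+(x^2+y^2)(l+c_2)^2))$ and $\widehat\theta_{(x,y)}(c;\alpha)=\sum_{k,l\in\mathbb{Z}}\exp(-\tfrac{\pi\alpha}{y}(k^2+2xkl+(x^2+y^2)l^2))e^{2\pi i(kc_2-lc_1)}$. The circumcenter point $a(x,y)=(a_1,a_2)$ is $a_1=\frac{(1-x)(x^2+y^2)}{2y^2}$, $a_2=\frac{x^2+y^2-x}{2y^2}$. *)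

From Stdlib Require Import Reals ZArith.
From Coquelicot Require Import Coquelicot.
Open Scope R_scope.

(* Sum over Z of f : Z -> R, as sum over k >= 0 plus sum over k <= -1
   (Coquelicot's total Series; the theta sums are absolutely convergent). *)
Definition zsum (f : Z -> R) : R :=
  Series (fun n : nat => f (Z.of_nat n)) + Series (fun n : nat => f (- Z.of_nat (S n))%Z).

(* Sum over Z x Z, as an iterated sum (equal to the double sum by absolute convergence). *)
Definition z2sum (f : Z -> Z -> R) : R := zsum (fun k => zsum (fun l => f k l)).

Definition theta (x y c1 c2 alpha : R) : R :=
  z2sum (fun k l =>
    let u := IZR k + c1 in let v := IZR l + c2 in
    exp (- (PI * alpha / y) * (u ^ 2 + 2 * x * u * v + (x ^ 2 + y ^ 2) * v ^ 2))).

Definition gw (x y alpha : R) (k l : Z) : R :=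
  exp (- (PI * alpha / y) * (IZR k ^ 2 + 2 * x * IZR k * IZR l + (x ^ 2 + y ^ 2) * IZR l ^ 2)).

(* hat-theta_{(x,y)}(c; alpha) is complex-valued: we define its real and
   imaginary parts (termwise real / imaginary parts of the complex series,
   e^{i t} = cos t + i sin t). *)
Definition thetahat_re (x y c1 c2 alpha : R) : R :=
  z2sum (fun k l => gw x y alpha k l * cos (2 * PI * (IZR k * c2 - IZR l * c1))).
Definition thetahat_im (x y c1 c2 alpha : R) : R :=
  z2sum (fun k l => gw x y alpha k l * sin (2 * PI * (IZR k * c2 - IZR l * c1))).

(* circumcenter point a(x,y) *)
Definition a1 (x y : R) : R := (1 - x) * (x ^ 2 + y ^ 2) / (2 * y ^ 2).
Definition a2 (x y : R) : R := (x ^ 2 + y ^ 2 - x) / (2 * y ^ 2).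

(* On the line [c1 + x c2 = 1/2] the summands of [theta] and of [Re thetahat] become explicit
   Gaussian terms in [(x, y, c2)], while [Im thetahat] vanishes identically because its summand
   is odd under [(k, l) -> (-k, -l)].  Near the base point these lattice families, their
   first-order coefficients and their second-order remainders are all dominated by one fixed
   Gaussian in [(k, l)], so the sums may be differentiated term by term; as [d c2 / dx = 0] at
   [x = 1/2], only the partial derivative in [x] (resp. [y]) contributes.  At [(1/2, sqrt 3 / 2)],
   where [c = (1/3, 1/3)] and the lattice is hexagonal, the summed derivative vanishes by
   symmetry: for [d/dx] a reflection [(k, l) -> (-k-l+c, l)] fixes the Gaussian weight and
   negates the derivative factor, and for [d/dy] the rotation of order three
   [(k, l) -> (-k-l+c, k)] fixes the weight while the three rotated derivative factors add up
   to zero. *)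

From Stdlib Require Import Reals ZArith Lra Lia Psatz.
From Coquelicot Require Import Coquelicot.
Open Scope R_scope.

(** * Absolutely convergent sums over [Z] *)

Definition zpos (n : nat) : Z := Z.of_nat n.
Definition zneg (n : nat) : Z := (- Z.of_nat (S n))%Z.

Definition zsummable (u : Z -> R) : Prop :=
  ex_series (fun n => Rabs (u (zpos n))) /\ ex_series (fun n => Rabs (u (zneg n))).

Lemma ex_series_dom (a b : nat -> R) :
  (forall n, Rabs (a n) <= b n) -> ex_series b -> ex_series a.
Proof. intros H Hb. apply (@ex_series_le R_AbsRing R_CompleteNormedModule a b); auto. Qed.

Lemma ex_series_abs_dom (a b : nat -> R) :
  (forall n, Rabs (a n) <= b n) -> ex_series b -> ex_series (fun n => Rabs (a n)).
Proof.
  intros H Hb. apply (ex_series_dom _ b); auto.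
  intro n. rewrite Rabs_Rabsolu. auto.
Qed.

Lemma Series_abs_dom (a b : nat -> R) :
  (forall n, Rabs (a n) <= b n) -> ex_series b -> Rabs (Series a) <= Series b.
Proof.
  intros H Hb. eapply Rle_trans.
  - apply Series_Rabs. eapply ex_series_abs_dom; eauto.
  - apply Series_le; auto. intro n; split; auto. apply Rabs_pos.
Qed.

Lemma Series_zero : Series (fun _ : nat => 0) = 0.
Proof.
  pose proof (Series_scal_l 0 (fun _ : nat => 0)) as H. rewrite Rmult_0_l in H.
  rewrite <- H. apply Series_ext. intro. simpl. lra.
Qed.

Lemma Series_nonneg (a : nat -> R) : (forall n, 0 <= a n) -> ex_series a -> 0 <= Series a.
Proof.
  intros Ha Hex. rewrite <- Series_zero. apply Series_le; auto.
  intro n; split; auto; lra.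
Qed.

Lemma zsum_ext (u v : Z -> R) : (forall n, u n = v n) -> zsum u = zsum v.
Proof. intros H. unfold zsum. f_equal; apply Series_ext; intro; apply H. Qed.

Lemma z2sum_ext (f g : Z -> Z -> R) : (forall k l, f k l = g k l) -> z2sum f = z2sum g.
Proof. intros H. apply zsum_ext. intro k. apply zsum_ext. auto. Qed.

Lemma zsummable_pos (u : Z -> R) : zsummable u -> ex_series (fun n => u (Z.of_nat n)).
Proof. intros [H _]. apply ex_series_Rabs. exact H. Qed.

Lemma zsummable_neg (u : Z -> R) : zsummable u -> ex_series (fun n => u (- Z.of_nat (S n))%Z).
Proof. intros [_ H]. apply ex_series_Rabs. exact H. Qed.

Lemma zsummable_dom (u v : Z -> R) :
  zsummable v -> (forall n, Rabs (u n) <= Rabs (v n)) -> zsummable u.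
Proof.
  intros [H1 H2] H.
  split; [apply (ex_series_abs_dom _ _ (fun n => H _) H1) | apply (ex_series_abs_dom _ _ (fun n => H _) H2)].
Qed.

Lemma zsummable_scal (c : R) (u : Z -> R) : zsummable u -> zsummable (fun n => c * u n).
Proof.
  intros [H1 H2]. split.
  - apply (ex_series_abs_dom _ (fun n => Rabs c * Rabs (u (zpos n)))).
    + intro n. rewrite Rabs_mult. lra.
    + apply (ex_series_scal_l (Rabs c) _ H1).
  - apply (ex_series_abs_dom _ (fun n => Rabs c * Rabs (u (zneg n)))).
    + intro n. rewrite Rabs_mult. lra.
    + apply (ex_series_scal_l (Rabs c) _ H2).
Qed.

Lemma zsum_plus (u v : Z -> R) :
  zsummable u -> zsummable v -> zsum (fun n => u n + v n) = zsum u + zsum v.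
Proof.
  intros Hu Hv. unfold zsum.
  rewrite !Series_plus; auto using zsummable_pos, zsummable_neg. lra.
Qed.

Lemma zsum_scal (c : R) (u : Z -> R) : zsum (fun n => c * u n) = c * zsum u.
Proof. unfold zsum. rewrite !Series_scal_l. lra. Qed.

Lemma zsum_abs_le (u v : Z -> R) :
  zsummable v -> (forall n, Rabs (u n) <= v n) -> Rabs (zsum u) <= zsum v.
Proof.
  intros [H1 H2] H.
  assert (Hv : forall n, 0 <= v n) by (intro n; eapply Rle_trans; [apply Rabs_pos | apply H]).
  assert (E1 : ex_series (fun n => v (Z.of_nat n))).
  { eapply ex_series_ext; [| exact H1]. intro n. apply Rabs_pos_eq, Hv. }
  assert (E2 : ex_series (fun n => v (- Z.of_nat (S n))%Z)).
  { eapply ex_series_ext; [| exact H2]. intro n. apply Rabs_pos_eq, Hv. }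
  eapply Rle_trans. apply Rabs_triang.
  apply Rplus_le_compat; apply Series_abs_dom; auto.
Qed.

Lemma zsum_nonneg (v : Z -> R) : zsummable v -> (forall n, 0 <= v n) -> 0 <= zsum v.
Proof.
  intros Hv H. unfold zsum.
  apply Rplus_le_le_0_compat; apply Series_nonneg; auto using zsummable_pos, zsummable_neg.
Qed.

Lemma zsummable_opp (u : Z -> R) : zsummable u -> zsummable (fun n => u (- n)%Z).
Proof.
  intros [H1 H2]. split.
  - apply (proj2 (ex_series_incr_1 _)). eapply ex_series_ext; [| exact H2].
    intro n. unfold zpos, zneg. apply (f_equal Rabs), f_equal; lia.
  - apply (proj1 (ex_series_incr_1 _)) in H1. eapply ex_series_ext; [| exact H1].
    intro n. unfold zpos, zneg. apply (f_equal Rabs), f_equal; lia.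
Qed.

Lemma zsum_opp (u : Z -> R) : zsummable u -> zsum (fun n => u (- n)%Z) = zsum u.
Proof.
  intros Hu. unfold zsum.
  rewrite (Series_incr_1 (fun n => u (- Z.of_nat n)%Z)) by apply (zsummable_pos _ (zsummable_opp _ Hu)).
  rewrite (Series_incr_1 (fun n => u (Z.of_nat n))) by apply (zsummable_pos _ Hu).
  rewrite (Series_ext (fun n => u (- - Z.of_nat (S n))%Z) (fun k => u (Z.of_nat (S k)))).
  - simpl. lra.
  - intro n. f_equal; lia.
Qed.

Lemma zsummable_succ (u : Z -> R) : zsummable u -> zsummable (fun n => u (n + 1)%Z).
Proof.
  intros [H1 H2]. split.
  - apply (proj1 (ex_series_incr_1 _)) in H1. eapply ex_series_ext; [| exact H1].
    intro n. unfold zpos. apply (f_equal Rabs), f_equal; lia.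
  - apply (proj2 (ex_series_incr_1 _)). eapply ex_series_ext; [| exact H2].
    intro n. unfold zneg. apply (f_equal Rabs), f_equal; lia.
Qed.

Lemma zsummable_pred (u : Z -> R) : zsummable u -> zsummable (fun n => u (n - 1)%Z).
Proof.
  intros [H1 H2]. split.
  - apply (proj2 (ex_series_incr_1 _)). eapply ex_series_ext; [| exact H1].
    intro n. unfold zpos. apply (f_equal Rabs), f_equal; lia.
  - apply (proj1 (ex_series_incr_1 _)) in H2. eapply ex_series_ext; [| exact H2].
    intro n. unfold zneg. apply (f_equal Rabs), f_equal; lia.
Qed.

Lemma zsum_succ (u : Z -> R) : zsummable u -> zsum (fun n => u (n + 1)%Z) = zsum u.
Proof.
  intros Hu. unfold zsum.
  rewrite (Series_incr_1 (fun n => u (- Z.of_nat (S n) + 1)%Z))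
    by apply (zsummable_neg _ (zsummable_succ _ Hu)).
  rewrite (Series_incr_1 (fun n => u (Z.of_nat n))) by apply (zsummable_pos _ Hu).
  rewrite (Series_ext (fun n => u (Z.of_nat n + 1)%Z) (fun k => u (Z.of_nat (S k))))
    by (intro n; f_equal; lia).
  rewrite (Series_ext (fun k => u (- Z.of_nat (S (S k)) + 1)%Z) (fun n => u (- Z.of_nat (S n))%Z))
    by (intro n; f_equal; lia).
  replace (- Z.of_nat 1 + 1)%Z with 0%Z by lia. simpl. lra.
Qed.

Lemma zsum_translate (u : Z -> R) (c : Z) :
  zsummable u -> zsummable (fun n => u (n + c)%Z) /\ zsum (fun n => u (n + c)%Z) = zsum u.
Proof.
  intros Hu. induction c as [| c [H1 H2] | c [H1 H2]] using Z.peano_ind.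
  - split.
    + eapply zsummable_dom; [exact Hu |]. intro n. rewrite Z.add_0_r. lra.
    + apply zsum_ext. intro n. rewrite Z.add_0_r. auto.
  - split.
    + eapply zsummable_dom; [exact (zsummable_succ _ H1) |].
      intro n. cbv beta. replace (n + Z.succ c)%Z with (n + 1 + c)%Z by lia. lra.
    + rewrite <- H2, <- (zsum_succ _ H1). apply zsum_ext. intro n. f_equal; lia.
  - assert (H3 : zsummable (fun n => u (n + Z.pred c)%Z)).
    { eapply zsummable_dom; [exact (zsummable_pred _ H1) |].
      intro n. cbv beta. replace (n + Z.pred c)%Z with (n - 1 + c)%Z by lia. lra. }
    split; auto.
    rewrite <- H2, <- (zsum_succ _ H3). apply zsum_ext. intro n. f_equal; lia.
Qed.

Lemma zsum_reflect (u : Z -> R) (c : Z) : zsummable u -> zsum (fun n => u (- n + c)%Z) = zsum u.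
Proof.
  intros Hu. destruct (zsum_translate u c Hu) as [H1 H2].
  rewrite <- H2, <- (zsum_opp _ H1). apply zsum_ext. intro n. f_equal; lia.
Qed.

(** * Interchanging the order of a double series *)

Lemma ex_series_sum_f_R0 (g : nat -> nat -> R) N :
  (forall n, ex_series (g n)) -> ex_series (fun m => sum_f_R0 (fun n => g n m) N).
Proof.
  intros Hg. induction N as [| N IH]; simpl; auto.
  apply (ex_series_plus _ _ IH (Hg (S N))).
Qed.

Lemma Series_sum_f_R0 (g : nat -> nat -> R) N :
  (forall n, ex_series (g n)) ->
  sum_f_R0 (fun n => Series (g n)) N = Series (fun m => sum_f_R0 (fun n => g n m) N).
Proof.
  intros Hg. induction N as [| N IH]; simpl.
  - apply Series_ext. reflexivity.
  - rewrite IH, <- Series_plus; auto using ex_series_sum_f_R0.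
Qed.

Lemma Series_tail_abs_le (c a : nat -> R) (B : R) N :
  (forall n, Rabs (c n) <= B * a n) -> ex_series a ->
  Rabs (sum_f_R0 c N - Series c) <= B * (Series a - sum_f_R0 a N).
Proof.
  intros Hc Ha.
  assert (Hex : ex_series c) by (apply (ex_series_dom _ (fun n => B * a n)); auto;
    apply (ex_series_scal_l B _ Ha)).
  rewrite (Series_incr_n c (S N)), (Series_incr_n a (S N)) by (lia || auto).
  simpl Init.Nat.pred.
  replace (sum_f_R0 c N - (sum_f_R0 c N + Series (fun k => c (S N + k)%nat)))
    with (- Series (fun k => c (S N + k)%nat)) by ring.
  replace (sum_f_R0 a N + Series (fun k => a (S N + k)%nat) - sum_f_R0 a N)
    with (Series (fun k => a (S N + k)%nat)) by ring.
  rewrite Rabs_Ropp, <- Series_scal_l. apply Series_abs_dom; auto.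
  apply (ex_series_scal_l B (fun k => a (S N + k)%nat)).
  apply (proj1 (ex_series_incr_n a (S N))). auto.
Qed.

Lemma Series_swap (g : nat -> nat -> R) (a b : nat -> R) :
  (forall n, 0 <= a n) -> (forall m, 0 <= b m) ->
  (forall n m, Rabs (g n m) <= a n * b m) -> ex_series a -> ex_series b ->
  Series (fun n => Series (g n)) = Series (fun m => Series (fun n => g n m)).
Proof.
  intros Ha0 Hb0 Hg Ha Hb.
  assert (Hrow : forall n, ex_series (g n)).
  { intro n. apply (ex_series_dom _ (fun m => a n * b m)); auto.
    apply (ex_series_scal_l (a n) _ Hb). }
  assert (Hcol : forall m, Rabs (Series (fun n => g n m)) <= Series a * b m).
  { intro m. rewrite <- Series_scal_r. apply Series_abs_dom; auto.
    apply (ex_series_scal_r _ _ Ha). }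
  assert (Ecol : ex_series (fun m => Series (fun n => g n m))).
  { apply (ex_series_dom _ (fun m => Series a * b m)); auto.
    apply (ex_series_scal_l _ _ Hb). }
  apply is_series_unique, is_series_Reals. intros eps Heps.
  set (K := Series b + 1).
  assert (HK : 0 < K) by (pose proof (Series_nonneg b Hb0 Hb); unfold K; lra).
  pose proof (Series_correct _ Ha) as Ca. apply is_series_Reals in Ca.
  destruct (Ca (eps / K)) as [N0 HN0]; [apply Rdiv_lt_0_compat; auto |].
  exists N0. intros N HN. specialize (HN0 N HN). unfold R_dist in *.
  rewrite Rabs_minus_sym in HN0.
  rewrite Series_sum_f_R0, <- Series_minus by auto using ex_series_sum_f_R0.
  eapply Rle_lt_trans.
  - apply (Series_abs_dom _ (fun m => b m * Rabs (Series a - sum_f_R0 a N))).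
    + intro m. eapply Rle_trans. apply (Series_tail_abs_le _ a (b m)).
      * intro n. rewrite Rmult_comm. auto.
      * auto.
      * apply Rmult_le_compat_l; auto. apply Rle_abs.
    + apply (ex_series_scal_r _ _ Hb).
  - rewrite Series_scal_r.
    apply Rle_lt_trans with (K * Rabs (Series a - sum_f_R0 a N)).
    + apply Rmult_le_compat_r. apply Rabs_pos. unfold K; lra.
    + replace eps with (K * (eps / K)) by (field; lra). apply Rmult_lt_compat_l; auto.
Qed.

(** * Lattice families dominated by a Gaussian *)

Lemma exp_le x y : x <= y -> exp x <= exp y.
Proof. intros [H | ->]; [left; apply exp_increasing |]; lra. Qed.

Definition gauss (e : R) (k : Z) : R := exp (- e * IZR k ^ 2).

Definition sqnorm (k l : Z) : R := IZR k ^ 2 + IZR l ^ 2.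

Lemma sqnorm_ge0 k l : 0 <= sqnorm k l.
Proof. unfold sqnorm. pose proof (pow2_ge_0 (IZR k)). pose proof (pow2_ge_0 (IZR l)). lra. Qed.

Lemma gauss_mul e k l : gauss e k * gauss e l = exp (- e * sqnorm k l).
Proof. unfold gauss, sqnorm. rewrite <- exp_plus. f_equal. ring. Qed.

Definition gauss_summable_index (X : nat -> Z) : Prop :=
  forall e, 0 < e -> ex_series (fun n => gauss e (X n)).

Lemma exp_mult_INR x n : exp (x * INR n) = exp x ^ n.
Proof.
  induction n as [| n IH]; [simpl; rewrite Rmult_0_r, exp_0; auto |].
  rewrite S_INR, Rmult_plus_distr_l, Rmult_1_r, exp_plus, IH. simpl. ring.
Qed.

Lemma gauss_le_geom (X : nat -> Z) e n :
  0 < e -> INR n <= IZR (X n) ^ 2 -> gauss e (X n) <= exp (- e) ^ n.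
Proof. intros He Hn. unfold gauss. rewrite <- exp_mult_INR. apply exp_le. nra. Qed.

Lemma gauss_summable_of_sq (X : nat -> Z) :
  (forall n, INR n <= IZR (X n) ^ 2) -> gauss_summable_index X.
Proof.
  intros HX e He. apply (ex_series_dom _ (fun n => exp (- e) ^ n)).
  - intro n. rewrite Rabs_pos_eq by (apply Rlt_le, exp_pos). apply gauss_le_geom; auto.
  - apply ex_series_geom. rewrite Rabs_pos_eq by (apply Rlt_le, exp_pos).
    rewrite <- exp_0. apply exp_increasing. lra.
Qed.

Lemma gauss_summable_zpos : gauss_summable_index zpos.
Proof.
  apply gauss_summable_of_sq. intro n. unfold zpos. rewrite <- INR_IZR_INZ.
  destruct n; [simpl; lra |]. rewrite S_INR. pose proof (pos_INR n). nra.
Qed.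

Lemma gauss_summable_zneg : gauss_summable_index zneg.
Proof.
  apply gauss_summable_of_sq. intro n. unfold zneg. rewrite opp_IZR, <- INR_IZR_INZ, S_INR.
  pose proof (pos_INR n). nra.
Qed.

Lemma zsummable_gauss e : 0 < e -> zsummable (gauss e).
Proof.
  intros He.
  split; eapply ex_series_ext; [| apply (gauss_summable_zpos e He) | | apply (gauss_summable_zneg e He)];
    intro n; simpl; rewrite Rabs_pos_eq; auto; apply Rlt_le, exp_pos.
Qed.

Definition gauss_dom (f : Z -> Z -> R) : Prop :=
  exists e M, 0 < e /\ forall k l, Rabs (f k l) <= M * exp (- e * sqnorm k l).

Lemma gauss_dom_bound (f : Z -> Z -> R) : gauss_dom f ->
  exists e M, 0 < e /\ 0 <= M /\ forall k l, Rabs (f k l) <= M * (gauss e k * gauss e l).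
Proof.
  intros [e [M [He H]]]. exists e, M. repeat split; auto.
  - specialize (H 0%Z 0%Z). pose proof (Rabs_pos (f 0%Z 0%Z)). pose proof (exp_pos (- e * sqnorm 0 0)).
    nra.
  - intros k l. rewrite gauss_mul. auto.
Qed.

Lemma gauss_dom_row (f : Z -> Z -> R) k : gauss_dom f -> zsummable (f k).
Proof.
  intros Hf. destruct (gauss_dom_bound f Hf) as [e [M [He [HM H]]]].
  apply (zsummable_dom _ (fun l => (M * gauss e k) * gauss e l)).
  - apply zsummable_scal, zsummable_gauss; auto.
  - intro l. pose proof (exp_pos (- e * IZR k ^ 2)). pose proof (exp_pos (- e * IZR l ^ 2)).
    rewrite (Rabs_pos_eq (M * gauss e k * gauss e l)), Rmult_assoc; auto.
    unfold gauss. apply Rmult_le_pos; [apply Rmult_le_pos |]; lra.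
Qed.

Lemma gauss_dom_outer (f : Z -> Z -> R) : gauss_dom f -> zsummable (fun k => zsum (f k)).
Proof.
  intros Hf. destruct (gauss_dom_bound f Hf) as [e [M [He [HM H]]]].
  assert (HS : 0 <= zsum (gauss e))
    by (apply zsum_nonneg; [apply zsummable_gauss; auto | intro; apply Rlt_le, exp_pos]).
  apply (zsummable_dom _ (fun k => (M * zsum (gauss e)) * gauss e k)).
  - apply zsummable_scal, zsummable_gauss; auto.
  - intro k. assert (0 < gauss e k) by apply exp_pos.
    rewrite (Rabs_pos_eq (M * zsum (gauss e) * gauss e k)) by (apply Rmult_le_pos; nra).
    eapply Rle_trans.
    + apply (zsum_abs_le _ (fun l => (M * gauss e k) * gauss e l)).
      * apply zsummable_scal, zsummable_gauss; auto.
      * intro l. rewrite Rmult_assoc. auto.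
    + rewrite zsum_scal. right. ring.
Qed.

Lemma gauss_dom_le (f g : Z -> Z -> R) :
  gauss_dom g -> (forall k l, Rabs (f k l) <= Rabs (g k l)) -> gauss_dom f.
Proof. intros [e [M [He H]]] H2. exists e, M. split; auto. intros k l. eapply Rle_trans; eauto. Qed.

Lemma gauss_dom_scal (c : R) (f : Z -> Z -> R) : gauss_dom f -> gauss_dom (fun k l => c * f k l).
Proof.
  intros [e [M [He H]]]. exists e, (Rabs c * M). split; auto. intros k l.
  rewrite Rabs_mult, Rmult_assoc. apply Rmult_le_compat_l; auto. apply Rabs_pos.
Qed.

Lemma gauss_dom_plus (f g : Z -> Z -> R) :
  gauss_dom f -> gauss_dom g -> gauss_dom (fun k l => f k l + g k l).
Proof.
  intros [e1 [M1 [He1 H1]]] [e2 [M2 [He2 H2]]].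
  exists (Rmin e1 e2), (Rabs M1 + Rabs M2). split; [apply Rmin_glb_lt; auto |]. intros k l.
  assert (Hmono : forall e, Rmin e1 e2 <= e -> exp (- e * sqnorm k l) <= exp (- Rmin e1 e2 * sqnorm k l)).
  { intros e He. apply exp_le. pose proof (sqnorm_ge0 k l). nra. }
  pose proof (Hmono e1 (Rmin_l e1 e2)). pose proof (Hmono e2 (Rmin_r e1 e2)).
  pose proof (exp_pos (- e1 * sqnorm k l)). pose proof (exp_pos (- e2 * sqnorm k l)).
  specialize (H1 k l). specialize (H2 k l).
  assert (M1 * exp (- e1 * sqnorm k l) <= Rabs M1 * exp (- Rmin e1 e2 * sqnorm k l))
    by (pose proof (Rle_abs M1); pose proof (Rabs_pos M1); nra).
  assert (M2 * exp (- e2 * sqnorm k l) <= Rabs M2 * exp (- Rmin e1 e2 * sqnorm k l))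
    by (pose proof (Rle_abs M2); pose proof (Rabs_pos M2); nra).
  eapply Rle_trans. apply Rabs_triang. lra.
Qed.

Lemma gauss_dom_swap (f : Z -> Z -> R) : gauss_dom f -> gauss_dom (fun k l => f l k).
Proof.
  intros [e [M [He H]]]. exists e, M. split; auto. intros k l.
  replace (sqnorm k l) with (sqnorm l k) by (unfold sqnorm; ring). auto.
Qed.

Lemma gauss_dom_reflect (f : Z -> Z -> R) c : gauss_dom f -> gauss_dom (fun k l => f (- k - l + c)%Z l).
Proof.
  intros Hf. destruct (gauss_dom_bound f Hf) as [e [M [He [HM H]]]].
  exists (e / 4), (M * exp (e * IZR c ^ 2)). split; [lra |]. intros k l.
  eapply Rle_trans; [apply H |]. rewrite gauss_mul, Rmult_assoc. apply Rmult_le_compat_l; auto.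
  rewrite <- exp_plus. apply exp_le. unfold sqnorm. rewrite plus_IZR, minus_IZR, opp_IZR.
  set (K := IZR k). set (L := IZR l). set (C := IZR c).
  assert ((K ^ 2 + L ^ 2) / 4 <= (- K - L + C) ^ 2 + L ^ 2 + C ^ 2).
  { pose proof (pow2_ge_0 (- K - 2 * L + C)). pose proof (pow2_ge_0 (L + C)).
    pose proof (pow2_ge_0 (- K - L + 2 * C)). pose proof (pow2_ge_0 (- K - L + C)).
    pose proof (pow2_ge_0 L). pose proof (pow2_ge_0 C). nra. }
  assert (e * ((K ^ 2 + L ^ 2) / 4) <= e * ((- K - L + C) ^ 2 + L ^ 2 + C ^ 2))
    by (apply Rmult_le_compat_l; lra).
  lra.
Qed.

Lemma z2sum_plus (f g : Z -> Z -> R) :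
  gauss_dom f -> gauss_dom g -> z2sum (fun k l => f k l + g k l) = z2sum f + z2sum g.
Proof.
  intros Hf Hg. unfold z2sum. rewrite <- zsum_plus by (apply gauss_dom_outer; auto).
  apply zsum_ext. intro k. apply zsum_plus; apply gauss_dom_row; auto.
Qed.

Lemma z2sum_scal (c : R) (f : Z -> Z -> R) : z2sum (fun k l => c * f k l) = c * z2sum f.
Proof. unfold z2sum. rewrite <- zsum_scal. apply zsum_ext. intro k. apply zsum_scal. Qed.

Lemma z2sum_abs_le (f g : Z -> Z -> R) :
  gauss_dom g -> (forall k l, Rabs (f k l) <= g k l) -> Rabs (z2sum f) <= z2sum g.
Proof.
  intros Hg H. apply zsum_abs_le; [apply gauss_dom_outer; auto |].
  intro k. apply zsum_abs_le; auto. apply gauss_dom_row; auto.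
Qed.

Lemma z2sum_opp (f : Z -> Z -> R) : gauss_dom f -> z2sum (fun k l => f (- k)%Z (- l)%Z) = z2sum f.
Proof.
  intros Hf. unfold z2sum.
  rewrite <- (zsum_opp (fun k => zsum (fun l => f k l))) by apply (gauss_dom_outer f Hf).
  apply zsum_ext. intro k. apply (zsum_opp (f (- k)%Z)), gauss_dom_row; auto.
Qed.

Definition quadrant_sum (f : Z -> Z -> R) (X Y : nat -> Z) : R :=
  Series (fun n => Series (fun m => f (X n) (Y m))).

Lemma ex_series_quadrant_row (f : Z -> Z -> R) (X Y : nat -> Z) :
  gauss_dom f -> gauss_summable_index X -> gauss_summable_index Y ->
  ex_series (fun n => Series (fun m => f (X n) (Y m))).
Proof.
  intros Hf HX HY. destruct (gauss_dom_bound f Hf) as [e [M [He [HM H]]]].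
  apply (ex_series_dom _ (fun n => gauss e (X n) * (M * Series (fun m => gauss e (Y m))))).
  - intro n. eapply Rle_trans.
    + apply (Series_abs_dom _ (fun m => (M * gauss e (X n)) * gauss e (Y m))).
      * intro m. rewrite Rmult_assoc. auto.
      * apply (ex_series_scal_l _ _ (HY e He)).
    + rewrite Series_scal_l. right. ring.
  - apply (ex_series_scal_r _ _ (HX e He)).
Qed.

Lemma z2sum_quadrants (f : Z -> Z -> R) : gauss_dom f ->
  z2sum f = quadrant_sum f zpos zpos + quadrant_sum f zpos zneg
          + quadrant_sum f zneg zpos + quadrant_sum f zneg zneg.
Proof.
  intros Hf. unfold quadrant_sum. rewrite Rplus_assoc.
  pose proof gauss_summable_zpos as P. pose proof gauss_summable_zneg as N.
  rewrite <- (Series_plus _ _ (ex_series_quadrant_row f _ _ Hf P P) (ex_series_quadrant_row f _ _ Hf P N)),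
    <- (Series_plus _ _ (ex_series_quadrant_row f _ _ Hf N P) (ex_series_quadrant_row f _ _ Hf N N)).
  unfold z2sum, zsum, zpos, zneg. cbv beta.
  apply f_equal2; apply Series_ext; intro n; apply f_equal2; apply Series_ext; intro m; reflexivity.
Qed.

Lemma quadrant_sum_swap (f : Z -> Z -> R) (X Y : nat -> Z) :
  gauss_dom f -> gauss_summable_index X -> gauss_summable_index Y ->
  quadrant_sum (fun k l => f l k) X Y = quadrant_sum f Y X.
Proof.
  intros Hf HX HY. destruct (gauss_dom_bound f Hf) as [e [M [He [HM H]]]].
  apply (Series_swap (fun n m => f (Y m) (X n)) (fun n => M * gauss e (X n)) (fun m => gauss e (Y m))).
  - intro n. pose proof (exp_pos (- e * IZR (X n) ^ 2)). unfold gauss. nra.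
  - intro m. apply Rlt_le, exp_pos.
  - intros n m. eapply Rle_trans; [apply H | right; ring].
  - apply (ex_series_scal_l _ _ (HX e He)).
  - apply HY; auto.
Qed.

Lemma z2sum_swap (f : Z -> Z -> R) : gauss_dom f -> z2sum (fun k l => f l k) = z2sum f.
Proof.
  intros Hf. rewrite (z2sum_quadrants f Hf), z2sum_quadrants by (apply gauss_dom_swap; auto).
  pose proof gauss_summable_zpos as P. pose proof gauss_summable_zneg as N.
  rewrite (quadrant_sum_swap f zpos zpos), (quadrant_sum_swap f zpos zneg),
    (quadrant_sum_swap f zneg zpos), (quadrant_sum_swap f zneg zneg); auto.
  ring.
Qed.

Lemma z2sum_reflect (f : Z -> Z -> R) c :
  gauss_dom f -> z2sum (fun k l => f (- k - l + c)%Z l) = z2sum f.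
Proof.
  intros Hf. rewrite <- z2sum_swap by (apply gauss_dom_reflect; auto).
  rewrite <- (z2sum_swap f Hf). apply zsum_ext. intro k.
  rewrite <- (zsum_reflect (fun l => f l k) (- k + c)).
  - apply zsum_ext. intro l. f_equal. lia.
  - apply (gauss_dom_row (fun k l => f l k)), gauss_dom_swap; auto.
Qed.

Lemma gauss_dom_rotate (f : Z -> Z -> R) c :
  gauss_dom f -> gauss_dom (fun k l => f (- k - l + c)%Z k).
Proof.
  intros Hf. apply (gauss_dom_le _ (fun k l => f (- l - k + c)%Z k)).
  - apply (gauss_dom_swap (fun k l => f (- k - l + c)%Z l)), gauss_dom_reflect; auto.
  - intros k l. replace (- l - k + c)%Z with (- k - l + c)%Z by lia. lra.
Qed.

Lemma z2sum_rotate (f : Z -> Z -> R) c :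
  gauss_dom f -> z2sum (fun k l => f (- k - l + c)%Z k) = z2sum f.
Proof.
  intros Hf. rewrite <- (z2sum_reflect f c Hf).
  rewrite <- (z2sum_swap (fun k l => f (- k - l + c)%Z l)) by (apply gauss_dom_reflect; auto).
  apply z2sum_ext. intros k l. f_equal. lia.
Qed.

Definition moderate (p : Z -> Z -> R) : Prop :=
  forall d, 0 < d -> exists C, 0 <= C /\ forall k l, Rabs (p k l) <= C * exp (d * sqnorm k l).

Lemma moderate_le (p q : Z -> Z -> R) :
  moderate q -> (forall k l, Rabs (p k l) <= Rabs (q k l)) -> moderate p.
Proof.
  intros Hq H d Hd. destruct (Hq d Hd) as [C [HC HH]].
  exists C. split; auto. intros k l. eapply Rle_trans; eauto.
Qed.

Lemma moderate_const (c : R) : moderate (fun _ _ => c).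
Proof.
  intros d Hd. exists (Rabs c). split; [apply Rabs_pos |]. intros k l.
  assert (1 <= exp (d * sqnorm k l))
    by (rewrite <- exp_0; apply exp_le; pose proof (sqnorm_ge0 k l); nra).
  pose proof (Rabs_pos c). nra.
Qed.

Lemma moderate_plus (p q : Z -> Z -> R) : moderate p -> moderate q -> moderate (fun k l => p k l + q k l).
Proof.
  intros Hp Hq d Hd. destruct (Hp d Hd) as [C1 [H1 HH1]]. destruct (Hq d Hd) as [C2 [H2 HH2]].
  exists (C1 + C2). split; [lra |]. intros k l. eapply Rle_trans; [apply Rabs_triang |].
  specialize (HH1 k l). specialize (HH2 k l). lra.
Qed.

Lemma moderate_mult (p q : Z -> Z -> R) : moderate p -> moderate q -> moderate (fun k l => p k l * q k l).
Proof.
  intros Hp Hq d Hd.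
  destruct (Hp (d / 2)) as [C1 [H1 HH1]]; [lra |]. destruct (Hq (d / 2)) as [C2 [H2 HH2]]; [lra |].
  exists (C1 * C2). split; [nra |]. intros k l. rewrite Rabs_mult.
  replace (d * sqnorm k l) with (d / 2 * sqnorm k l + d / 2 * sqnorm k l) by field.
  rewrite exp_plus.
  apply Rle_trans with ((C1 * exp (d / 2 * sqnorm k l)) * (C2 * exp (d / 2 * sqnorm k l))).
  - apply Rmult_le_compat; auto using Rabs_pos.
  - right; ring.
Qed.

Lemma moderate_opp (p : Z -> Z -> R) : moderate p -> moderate (fun k l => - p k l).
Proof. intros H. apply (moderate_le _ p H). intros. rewrite Rabs_Ropp. lra. Qed.

Lemma moderate_minus (p q : Z -> Z -> R) : moderate p -> moderate q -> moderate (fun k l => p k l - q k l).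
Proof. intros H1 H2. apply (moderate_plus p (fun k l => - q k l)); auto. apply moderate_opp; auto. Qed.

Lemma moderate_pow2 (p : Z -> Z -> R) : moderate p -> moderate (fun k l => p k l ^ 2).
Proof.
  intros H. apply (moderate_le _ (fun k l => p k l * p k l)); [apply moderate_mult; auto |].
  intros; right; f_equal; ring.
Qed.

Lemma moderate_div (p : Z -> Z -> R) (c : R) : moderate p -> moderate (fun k l => p k l / c).
Proof.
  intros H. apply (moderate_le _ (fun k l => p k l * / c)); [apply moderate_mult, moderate_const; auto |].
  intros; right; reflexivity.
Qed.

Lemma moderate_abs (p : Z -> Z -> R) : moderate p -> moderate (fun k l => Rabs (p k l)).
Proof. intros Hp. apply (moderate_le _ p Hp). intros. rewrite Rabs_Rabsolu. lra. Qed.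

Lemma Rabs_le_exp_sq x d : 0 < d -> Rabs x <= (1 + / d) * exp (d * x ^ 2).
Proof.
  intros Hd. assert (0 < / d) by (apply Rinv_0_lt_compat; auto).
  apply Rle_trans with (1 + x ^ 2); [unfold Rabs; destruct Rcase_abs; nra |].
  apply Rle_trans with ((1 + / d) * (1 + d * x ^ 2)).
  - replace ((1 + / d) * (1 + d * x ^ 2)) with (1 + d * x ^ 2 + / d + x ^ 2) by (field; lra).
    pose proof (pow2_ge_0 x). nra.
  - apply Rmult_le_compat_l; [lra |]. apply exp_ineq1_le.
Qed.

Lemma moderate_fst : moderate (fun k _ => IZR k).
Proof.
  intros d Hd. assert (0 < / d) by (apply Rinv_0_lt_compat; auto).
  exists (1 + / d). split; [lra |]. intros k l.
  eapply Rle_trans; [apply (Rabs_le_exp_sq _ d Hd) |].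
  apply Rmult_le_compat_l; [lra |]. apply exp_le. unfold sqnorm. pose proof (pow2_ge_0 (IZR l)). nra.
Qed.

Lemma moderate_snd : moderate (fun _ l => IZR l).
Proof.
  intros d Hd. assert (0 < / d) by (apply Rinv_0_lt_compat; auto).
  exists (1 + / d). split; [lra |]. intros k l.
  eapply Rle_trans; [apply (Rabs_le_exp_sq _ d Hd) |].
  apply Rmult_le_compat_l; [lra |]. apply exp_le. unfold sqnorm. pose proof (pow2_ge_0 (IZR k)). nra.
Qed.

Ltac solve_moderate :=
  repeat first
    [ apply moderate_const | apply moderate_plus | apply moderate_minus | apply moderate_mult
    | apply moderate_opp | apply moderate_pow2 | apply moderate_abs | apply moderate_div
    | apply moderate_fst | apply moderate_snd ].

Lemma gauss_dom_exp_moderate (Q p : Z -> Z -> R) b C :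
  0 < b -> (forall k l, b * sqnorm k l - C <= Q k l) -> moderate p ->
  gauss_dom (fun k l => exp (- Q k l) * p k l).
Proof.
  intros Hb HQ Hp. destruct (Hp (b / 2)) as [C' [HC' H]]; [lra |].
  exists (b / 2), (exp C * C'). split; [lra |]. intros k l.
  rewrite Rabs_mult, Rabs_pos_eq by (apply Rlt_le, exp_pos).
  apply Rle_trans with (exp (C - b * sqnorm k l) * (C' * exp (b / 2 * sqnorm k l))).
  - apply Rmult_le_compat; auto using Rabs_pos.
    + apply Rlt_le, exp_pos.
    + apply exp_le. specialize (HQ k l). lra.
  - replace (C - b * sqnorm k l) with (C + - b * sqnorm k l) by ring.
    rewrite exp_plus.
    replace (- (b / 2) * sqnorm k l) with (- b * sqnorm k l + b / 2 * sqnorm k l) by field.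
    rewrite exp_plus. right. ring.
Qed.

Lemma gauss_dom_exp (Q : Z -> Z -> R) b C :
  0 < b -> (forall k l, b * sqnorm k l - C <= Q k l) -> gauss_dom (fun k l => exp (- Q k l)).
Proof.
  intros Hb HQ. apply (gauss_dom_le _ (fun k l => exp (- Q k l) * 1)).
  - apply (gauss_dom_exp_moderate Q _ b C); auto. apply moderate_const.
  - intros. rewrite Rmult_1_r. lra.
Qed.

Lemma z2sum_eq0_opp_odd (f : Z -> Z -> R) :
  gauss_dom f -> (forall k l, f (- k)%Z (- l)%Z = - f k l) -> z2sum f = 0.
Proof.
  intros Hf H. pose proof (z2sum_opp f Hf) as E.
  rewrite (z2sum_ext _ (fun k l => -1 * f k l)), z2sum_scal in E by (intros; rewrite H; ring).
  lra.
Qed.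

Lemma z2sum_eq0_reflect_odd (f : Z -> Z -> R) c :
  gauss_dom f -> (forall k l, f (- k - l + c)%Z l = - f k l) -> z2sum f = 0.
Proof.
  intros Hf H. pose proof (z2sum_reflect f c Hf) as E.
  rewrite (z2sum_ext _ (fun k l => -1 * f k l)), z2sum_scal in E by (intros; rewrite H; ring).
  lra.
Qed.

Lemma z2sum_eq0_rotate (w g : Z -> Z -> R) c :
  gauss_dom (fun k l => w k l * g k l) ->
  (forall k l, w (- k - l + c)%Z k = w k l) ->
  (forall k l, g k l + g (- k - l + c)%Z k + g (- (- k - l + c) - k + c)%Z (- k - l + c)%Z = 0) ->
  z2sum (fun k l => w k l * g k l) = 0.
Proof.
  intros H0 Hw Hg.
  set (F0 := fun k l => w k l * g k l).
  set (F1 := fun k l => w k l * g (- k - l + c)%Z k).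
  set (F2 := fun k l => w k l * g (- (- k - l + c) - k + c)%Z (- k - l + c)%Z).
  assert (R1 : forall k l, F0 (- k - l + c)%Z k = F1 k l) by (intros; unfold F0, F1; rewrite Hw; auto).
  assert (R2 : forall k l, F1 (- k - l + c)%Z k = F2 k l) by (intros; unfold F1, F2; rewrite Hw; auto).
  assert (H1 : gauss_dom F1)
    by (apply (gauss_dom_le _ _ (gauss_dom_rotate F0 c H0)); intros; rewrite R1; lra).
  assert (H2 : gauss_dom F2)
    by (apply (gauss_dom_le _ _ (gauss_dom_rotate F1 c H1)); intros; rewrite R2; lra).
  assert (E1 : z2sum F1 = z2sum F0)
    by (rewrite <- (z2sum_rotate F0 c H0); apply z2sum_ext; intros; rewrite R1; auto).
  assert (E2 : z2sum F2 = z2sum F1)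
    by (rewrite <- (z2sum_rotate F1 c H1); apply z2sum_ext; intros; rewrite R2; auto).
  assert (E3 : z2sum (fun k l => F0 k l + F1 k l + F2 k l) = 0).
  { rewrite (z2sum_ext _ (fun k l => 0 * 1)), z2sum_scal; [ring |].
    intros k l. unfold F0, F1, F2. rewrite <- !Rmult_plus_distr_l, Hg. ring. }
  rewrite !z2sum_plus in E3 by (auto; apply gauss_dom_plus; auto).
  fold F0. lra.
Qed.

(** * First-order Taylor estimates *)

Lemma MVT_between (f df : R -> R) a b : (forall t, is_derive f t (df t)) ->
  exists c, Rmin a b <= c <= Rmax a b /\ f b - f a = df c * (b - a).
Proof.
  intros H. apply (MVT_gen f a b df); intros; auto.
  apply derivable_continuous_pt. exists (df x). apply is_derive_Reals. auto.
Qed.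

Lemma Rabs_between a b c : Rmin a b <= c <= Rmax a b -> Rabs (c - a) <= Rabs (b - a).
Proof. unfold Rmin, Rmax. destruct (Rle_dec a b); intros [H1 H2]; unfold Rabs; repeat destruct Rcase_abs; lra. Qed.

Lemma exp_neg_between a b c :
  Rmin a b <= c <= Rmax a b -> exp (- c) <= Rmax (exp (- a)) (exp (- b)).
Proof.
  unfold Rmin. destruct (Rle_dec a b); intros [H1 H2].
  - eapply Rle_trans; [| apply Rmax_l]. apply exp_le. lra.
  - eapply Rle_trans; [| apply Rmax_r]. apply exp_le. lra.
Qed.

Lemma pow2_Rabs x : x ^ 2 = Rabs x * Rabs x.
Proof. unfold Rabs; destruct Rcase_abs; ring. Qed.

Lemma exp_neg_lipschitz a b :
  Rabs (exp (- b) - exp (- a)) <= Rabs (b - a) * Rmax (exp (- a)) (exp (- b)).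
Proof.
  destruct (MVT_between (fun t => exp (- t)) (fun t => - exp (- t)) a b) as [c [Hc E]].
  - intro t. auto_derive; auto. ring.
  - rewrite E, Rabs_mult, Rabs_Ropp, Rabs_pos_eq, Rmult_comm by (apply Rlt_le, exp_pos).
    apply Rmult_le_compat_l; [apply Rabs_pos | apply exp_neg_between; auto].
Qed.

Lemma exp_neg_taylor1 a b :
  Rabs (exp (- b) - exp (- a) + exp (- a) * (b - a)) <= (b - a) ^ 2 * Rmax (exp (- a)) (exp (- b)).
Proof.
  destruct (MVT_between (fun t => exp (- t) + exp (- a) * t) (fun t => - exp (- t) + exp (- a)) a b)
    as [c [Hc E]].
  { intro t. auto_derive; auto. ring. }
  replace (exp (- b) - exp (- a) + exp (- a) * (b - a))
    with (exp (- b) + exp (- a) * b - (exp (- a) + exp (- a) * a)) by ring.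
  rewrite E, Rabs_mult.
  replace (- exp (- c) + exp (- a)) with (- (exp (- c) - exp (- a))) by ring. rewrite Rabs_Ropp.
  pose proof (exp_neg_lipschitz a c) as L. pose proof (Rabs_between _ _ _ Hc).
  assert (Rmax (exp (- a)) (exp (- c)) <= Rmax (exp (- a)) (exp (- b)))
    by (apply Rmax_lub; [apply Rmax_l | apply exp_neg_between; auto]).
  assert (0 <= Rmax (exp (- a)) (exp (- c)))
    by (eapply Rle_trans; [apply Rlt_le, exp_pos | apply Rmax_l]).
  rewrite (pow2_Rabs (b - a)). pose proof (Rabs_pos (c - a)). pose proof (Rabs_pos (b - a)).
  apply Rle_trans with (Rabs (b - a) * Rmax (exp (- a)) (exp (- b)) * Rabs (b - a)).
  - apply Rmult_le_compat; try nra. apply Rabs_pos.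
  - right; ring.
Qed.

Lemma cos_lipschitz a b : Rabs (cos b - cos a) <= Rabs (b - a).
Proof.
  destruct (MVT_between cos (fun t => - sin t) a b) as [c [Hc E]].
  - intro t. auto_derive; auto. ring.
  - rewrite E, Rabs_mult, Rabs_Ropp.
    assert (Rabs (sin c) <= 1) by (apply Rabs_le, SIN_bound).
    pose proof (Rabs_pos (b - a)). pose proof (Rabs_pos (sin c)). nra.
Qed.

Lemma sin_lipschitz a b : Rabs (sin b - sin a) <= Rabs (b - a).
Proof.
  destruct (MVT_between sin cos a b) as [c [Hc E]].
  - intro t. auto_derive; auto. ring.
  - rewrite E, Rabs_mult.
    assert (Rabs (cos c) <= 1) by (apply Rabs_le, COS_bound).
    pose proof (Rabs_pos (b - a)). pose proof (Rabs_pos (cos c)). nra.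
Qed.

Lemma cos_taylor1 a b : Rabs (cos b - cos a + sin a * (b - a)) <= (b - a) ^ 2.
Proof.
  destruct (MVT_between (fun t => cos t + sin a * t) (fun t => - sin t + sin a) a b) as [c [Hc E]].
  { intro t. auto_derive; auto. ring. }
  replace (cos b - cos a + sin a * (b - a)) with (cos b + sin a * b - (cos a + sin a * a)) by ring.
  rewrite E, Rabs_mult.
  replace (- sin c + sin a) with (- (sin c - sin a)) by ring. rewrite Rabs_Ropp, pow2_Rabs.
  pose proof (sin_lipschitz a c). pose proof (Rabs_between _ _ _ Hc).
  apply Rmult_le_compat; auto using Rabs_pos; lra.
Qed.

(** [Q1] and [F1] stand for the linear parts of the increments [Q - Q0] and [F - F0]. *)

Lemma exp_neg_expansion (Q Q0 Q1 P P' h B : R) : 0 <= h ->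
  Rabs (Q - Q0) <= P * h -> Rabs (Q - Q0 - Q1) <= P' * h ^ 2 ->
  exp (- Q) <= B -> exp (- Q0) <= B ->
  Rabs (exp (- Q) - exp (- Q0) + exp (- Q0) * Q1) <= (P ^ 2 + P') * h ^ 2 * B.
Proof.
  intros Hh H1 H2 H3 H4.
  replace (exp (- Q) - exp (- Q0) + exp (- Q0) * Q1)
    with ((exp (- Q) - exp (- Q0) + exp (- Q0) * (Q - Q0)) - exp (- Q0) * (Q - Q0 - Q1)) by ring.
  eapply Rle_trans; [apply Rabs_triang |]. rewrite Rabs_Ropp, Rabs_mult, (Rabs_pos_eq (exp (- Q0)))
    by (apply Rlt_le, exp_pos).
  pose proof (exp_neg_taylor1 Q0 Q) as T.
  assert (Hm : Rmax (exp (- Q0)) (exp (- Q)) <= B) by (apply Rmax_lub; auto).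
  assert (0 <= Rmax (exp (- Q0)) (exp (- Q))) by (eapply Rle_trans; [apply Rlt_le, exp_pos | apply Rmax_l]).
  assert (Hsq : (Q - Q0) ^ 2 <= (P * h) ^ 2).
  { rewrite (pow2_Rabs (Q - Q0)). pose proof (Rabs_pos (Q - Q0)).
    replace ((P * h) ^ 2) with ((P * h) * (P * h)) by ring. apply Rmult_le_compat; auto. }
  pose proof (exp_pos (- Q0)). pose proof (pow2_ge_0 (Q - Q0)). pose proof (Rabs_pos (Q - Q0 - Q1)).
  assert ((Q - Q0) ^ 2 * Rmax (exp (- Q0)) (exp (- Q)) <= P ^ 2 * h ^ 2 * B).
  { apply Rle_trans with ((P * h) ^ 2 * B); [apply Rmult_le_compat; auto | right; ring]. }
  assert (exp (- Q0) * Rabs (Q - Q0 - Q1) <= P' * h ^ 2 * B).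
  { apply Rle_trans with (B * (P' * h ^ 2)); [apply Rmult_le_compat; lra | right; ring]. }
  lra.
Qed.

Lemma cos_expansion (F F0 F1 R R' h : R) :
  Rabs (F - F0) <= R * h -> Rabs (F - F0 - F1) <= R' * h ^ 2 ->
  Rabs (cos F - cos F0 + sin F0 * F1) <= R ^ 2 * h ^ 2 + R' * h ^ 2.
Proof.
  intros H1 H2.
  replace (cos F - cos F0 + sin F0 * F1)
    with ((cos F - cos F0 + sin F0 * (F - F0)) - sin F0 * (F - F0 - F1)) by ring.
  eapply Rle_trans; [apply Rabs_triang |]. rewrite Rabs_Ropp, Rabs_mult.
  pose proof (cos_taylor1 F0 F).
  assert (Rabs (sin F0) <= 1) by (apply Rabs_le, SIN_bound).
  assert ((F - F0) ^ 2 <= R ^ 2 * h ^ 2).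
  { rewrite (pow2_Rabs (F - F0)). pose proof (Rabs_pos (F - F0)).
    replace (R ^ 2 * h ^ 2) with ((R * h) * (R * h)) by ring. apply Rmult_le_compat; auto. }
  pose proof (Rabs_pos (sin F0)). pose proof (Rabs_pos (F - F0 - F1)).
  assert (Rabs (sin F0) * Rabs (F - F0 - F1) <= 1 * (R' * h ^ 2)) by (apply Rmult_le_compat; auto).
  lra.
Qed.

Lemma exp_neg_cos_expansion (Q Q0 Q1 P P' F F0 F1 R R' h B : R) : 0 <= h ->
  Rabs (Q - Q0) <= P * h -> Rabs (Q - Q0 - Q1) <= P' * h ^ 2 ->
  Rabs (F - F0) <= R * h -> Rabs (F - F0 - F1) <= R' * h ^ 2 ->
  exp (- Q) <= B -> exp (- Q0) <= B ->
  Rabs (exp (- Q) * cos F - exp (- Q0) * cos F0 - (- exp (- Q0) * Q1 * cos F0 - exp (- Q0) * sin F0 * F1))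
   <= (P ^ 2 + P' + R ^ 2 + R' + P * R) * h ^ 2 * B.
Proof.
  intros Hh H1 H2 H3 H4 H5 H6.
  pose proof (exp_neg_expansion Q Q0 Q1 P P' h B Hh H1 H2 H5 H6) as GE.
  set (A := exp (- Q)) in *. set (A0 := exp (- Q0)) in *.
  replace (A * cos F - A0 * cos F0 - (- A0 * Q1 * cos F0 - A0 * sin F0 * F1)) with
    (A0 * (cos F - cos F0 + sin F0 * F1) + cos F0 * (A - A0 + A0 * Q1) + (A - A0) * (cos F - cos F0))
    by ring.
  assert (HA0 : 0 < A0) by apply exp_pos.
  pose proof (cos_expansion F F0 F1 R R' h H3 H4) as T1.
  assert (T2 : Rabs (A - A0) <= P * h * B).
  { eapply Rle_trans; [apply exp_neg_lipschitz |]. fold A A0.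
    pose proof (Rabs_pos (Q - Q0)).
    apply Rmult_le_compat; auto; [eapply Rle_trans; [apply Rlt_le, HA0 | apply Rmax_l] |].
    apply Rmax_lub; auto. }
  assert (T3 : Rabs (cos F - cos F0) <= R * h) by (eapply Rle_trans; [apply cos_lipschitz | auto]).
  eapply Rle_trans; [apply Rabs_triang |].
  eapply Rle_trans; [apply Rplus_le_compat_r, Rabs_triang |].
  rewrite !Rabs_mult, (Rabs_pos_eq A0) by lra.
  assert (Rabs (cos F0) <= 1) by (apply Rabs_le, COS_bound).
  pose proof (Rabs_pos (cos F - cos F0 + sin F0 * F1)). pose proof (Rabs_pos (A - A0 + A0 * Q1)).
  pose proof (Rabs_pos (A - A0)). pose proof (Rabs_pos (cos F - cos F0)). pose proof (Rabs_pos (cos F0)).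
  assert (A0 * Rabs (cos F - cos F0 + sin F0 * F1) <= B * (R ^ 2 * h ^ 2 + R' * h ^ 2))
    by (apply Rmult_le_compat; lra).
  assert (Rabs (cos F0) * Rabs (A - A0 + A0 * Q1) <= 1 * ((P ^ 2 + P') * h ^ 2 * B))
    by (apply Rmult_le_compat; lra).
  assert (Rabs (A - A0) * Rabs (cos F - cos F0) <= (P * h * B) * (R * h))
    by (apply Rmult_le_compat; lra).
  nra.
Qed.

(** * Differentiation under the lattice sum *)

Lemma Rabs_increment_le d h ds eta :
  h <> 0 -> eta <= 1 -> Rabs (d / h - ds) < eta -> Rabs d <= (Rabs ds + 1) * Rabs h.
Proof.
  intros Hh Heta H. replace d with ((d / h - ds + ds) * h) by (field; auto).
  rewrite Rabs_mult. apply Rmult_le_compat_r; [apply Rabs_pos |].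
  eapply Rle_trans; [apply Rabs_triang | lra].
Qed.

Lemma quadratic_remainder_le M h d K :
  Rabs d <= K * Rabs h -> M * (h ^ 2 + d ^ 2) <= (Rabs M * (1 + K ^ 2) + 1) * Rabs h * Rabs h.
Proof.
  intros Hd.
  assert (d ^ 2 <= K ^ 2 * h ^ 2).
  { rewrite (pow2_Rabs d), (pow2_Rabs h). pose proof (Rabs_pos d).
    replace (K ^ 2 * (Rabs h * Rabs h)) with ((K * Rabs h) * (K * Rabs h)) by ring.
    apply Rmult_le_compat; auto. }
  pose proof (pow2_ge_0 h). pose proof (pow2_ge_0 d). pose proof (Rle_abs M). pose proof (Rabs_pos M).
  apply Rle_trans with (Rabs M * (h ^ 2 + d ^ 2)); [apply Rmult_le_compat_r; lra |].
  apply Rle_trans with (Rabs M * ((1 + K ^ 2) * h ^ 2)); [apply Rmult_le_compat_l; lra |].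
  rewrite (pow2_Rabs h). pose proof (Rabs_pos h). assert (0 <= Rabs h * Rabs h) by nra. nra.
Qed.

Lemma is_derive_of_expansion (g s : R -> R) p0 L B ds M r :
  0 < r -> is_derive s p0 ds ->
  (forall p, Rabs (p - p0) < r ->
     Rabs (g p - g p0 - (p - p0) * L - (s p - s p0) * B) <= M * ((p - p0) ^ 2 + (s p - s p0) ^ 2)) ->
  is_derive g p0 (L + B * ds).
Proof.
  intros Hr Hs Hg. apply is_derive_Reals in Hs. apply is_derive_Reals. intros eps Heps.
  set (eta := Rmin 1 (eps / (2 * (Rabs B + 1)))).
  assert (Heta : 0 < eta)
    by (apply Rmin_glb_lt; [lra | apply Rdiv_lt_0_compat; pose proof (Rabs_pos B); lra]).
  assert (HetaB : Rabs B * eta <= eps / 2).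
  { apply Rle_trans with (Rabs B * (eps / (2 * (Rabs B + 1)))).
    - apply Rmult_le_compat_l; [apply Rabs_pos | apply Rmin_r].
    - pose proof (Rabs_pos B). apply Rmult_le_reg_r with (2 * (Rabs B + 1)); [lra |].
      field_simplify; nra. }
  destruct (Hs eta Heta) as [d1 Hd1].
  set (C := Rabs M * (1 + (Rabs ds + 1) ^ 2) + 1).
  assert (HC : 0 < C) by (unfold C; pose proof (Rabs_pos M); pose proof (pow2_ge_0 (Rabs ds + 1)); nra).
  assert (Hd : 0 < Rmin (Rmin d1 r) (eps / (2 * C)))
    by (apply Rmin_glb_lt; [apply Rmin_glb_lt; [apply cond_pos | auto] | apply Rdiv_lt_0_compat; lra]).
  exists (mkposreal _ Hd). intros h Hh0 Hh. simpl in Hh.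
  assert (Hh1 : Rabs h < d1) by (eapply Rlt_le_trans; [exact Hh | eapply Rle_trans; apply Rmin_l]).
  assert (Hh2 : Rabs h < r)
    by (eapply Rlt_le_trans; [exact Hh | eapply Rle_trans; [apply Rmin_l | apply Rmin_r]]).
  assert (Hh3 : C * Rabs h <= eps / 2).
  { apply Rle_trans with (C * (eps / (2 * C))); [apply Rmult_le_compat_l; [lra |] |].
    - left. eapply Rlt_le_trans; [exact Hh | apply Rmin_r].
    - right. field. lra. }
  assert (Hhpos : 0 < Rabs h) by (apply Rabs_pos_lt; auto).
  specialize (Hd1 h Hh0 Hh1). specialize (Hg (p0 + h)). replace (p0 + h - p0) with h in Hg by ring.
  set (d := s (p0 + h) - s p0) in *. set (rem := g (p0 + h) - g p0 - h * L - d * B) in *.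
  assert (Hrem : Rabs rem * / Rabs h <= C * Rabs h).
  { apply Rmult_le_reg_r with (Rabs h); auto. rewrite Rmult_assoc, Rinv_l, Rmult_1_r by lra.
    eapply Rle_trans; [apply Hg; auto |]. apply quadratic_remainder_le.
    apply (Rabs_increment_le _ _ _ eta); auto. apply Rmin_l. }
  assert (Rabs B * Rabs (d / h - ds) < eps / 2).
  { destruct (Req_dec (Rabs B) 0) as [E | E]; [rewrite E; lra |]. pose proof (Rabs_pos B).
    apply Rlt_le_trans with (Rabs B * eta); [apply Rmult_lt_compat_l; lra | auto]. }
  replace ((g (p0 + h) - g p0) / h - (L + B * ds)) with (rem / h + B * (d / h - ds))
    by (unfold rem; field; auto).
  eapply Rle_lt_trans; [apply Rabs_triang |].
  unfold Rdiv at 1. rewrite Rabs_mult, Rabs_mult, Rabs_inv. lra.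
Qed.

Lemma is_derive_comp_of_expansion (g : R -> R -> R) (s : R -> R) p0 A B M r ds :
  0 < r -> is_derive s p0 ds ->
  (forall p q, Rabs (p - p0) <= r -> Rabs (q - s p0) <= r ->
     Rabs (g p q - g p0 (s p0) - (p - p0) * A - (q - s p0) * B)
       <= M * ((p - p0) ^ 2 + (q - s p0) ^ 2)) ->
  is_derive (fun p => g p (s p)) p0 (A + B * ds).
Proof.
  intros Hr Hs Hg.
  assert (Hc : continuity_pt s p0)
    by (apply derivable_continuous_pt; exists ds; apply is_derive_Reals; auto).
  destruct (Hc r Hr) as [a [Ha Hca]].
  apply (is_derive_of_expansion _ s p0 A B ds M (Rmin a r)); auto.
  - apply Rmin_glb_lt; auto.
  - intros p Hp. apply Hg.
    + left. eapply Rlt_le_trans; [exact Hp | apply Rmin_r].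
    + destruct (Req_dec p p0) as [-> | Hne].
      * rewrite Rminus_diag_eq, Rabs_R0 by auto. lra.
      * left. apply (Hca p). split; [split; [exact I | auto] |].
        eapply Rlt_le_trans; [exact Hp | apply Rmin_l].
Qed.

Lemma z2sum_expansion (f0 f1 d1 d2 M : Z -> Z -> R) a b h :
  gauss_dom f0 -> gauss_dom f1 -> gauss_dom d1 -> gauss_dom d2 -> gauss_dom M ->
  (forall k l, Rabs (f1 k l - f0 k l - a * d1 k l - b * d2 k l) <= M k l * h) ->
  Rabs (z2sum f1 - z2sum f0 - a * z2sum d1 - b * z2sum d2) <= z2sum M * h.
Proof.
  intros H0 H1 H2 H3 HM H.
  assert (Hs : forall c f, gauss_dom f -> gauss_dom (fun k l => c * f k l)) by apply gauss_dom_scal.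
  assert (E : z2sum f1 - z2sum f0 - a * z2sum d1 - b * z2sum d2
            = z2sum (fun k l => f1 k l + -1 * f0 k l + - a * d1 k l + - b * d2 k l)).
  { rewrite !z2sum_plus, !z2sum_scal; auto using gauss_dom_plus. ring. }
  rewrite E, Rmult_comm, <- z2sum_scal.
  apply z2sum_abs_le; auto.
  intros k l. rewrite (Rmult_comm h). eapply Rle_trans; [| apply (H k l)]. right. f_equal. ring.
Qed.

Lemma is_derive_z2sum_comp (e : R -> R -> Z -> Z -> R) (s : R -> R) (Dp Dq M : Z -> Z -> R) p0 q0 r ds :
  0 < r -> s p0 = q0 -> is_derive s p0 ds ->
  (forall p q, Rabs (p - p0) <= r -> Rabs (q - q0) <= r -> gauss_dom (e p q)) ->
  gauss_dom Dp -> gauss_dom Dq -> gauss_dom M ->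
  (forall p q k l, Rabs (p - p0) <= r -> Rabs (q - q0) <= r ->
     Rabs (e p q k l - e p0 q0 k l - (p - p0) * Dp k l - (q - q0) * Dq k l)
       <= M k l * ((p - p0) ^ 2 + (q - q0) ^ 2)) ->
  is_derive (fun p => z2sum (e p (s p))) p0 (z2sum Dp + z2sum Dq * ds).
Proof.
  intros Hr <- Hs He HDp HDq HM Hrem.
  apply (is_derive_comp_of_expansion (fun p q => z2sum (e p q)) s p0 _ _ (z2sum M) r); auto.
  intros p q Hp Hq. apply z2sum_expansion; auto.
  apply He; auto; rewrite Rminus_diag_eq, Rabs_R0; lra.
Qed.

Lemma is_derive_z2sum (e : R -> Z -> Z -> R) (D M : Z -> Z -> R) p0 r :
  0 < r -> (forall p, Rabs (p - p0) <= r -> gauss_dom (e p)) -> gauss_dom D -> gauss_dom M ->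
  (forall p k l, Rabs (p - p0) <= r ->
     Rabs (e p k l - e p0 k l - (p - p0) * D k l) <= M k l * (p - p0) ^ 2) ->
  is_derive (fun p => z2sum (e p)) p0 (z2sum D).
Proof.
  intros Hr He HD HM Hrem.
  assert (HM0 : forall k l, 0 <= M k l).
  { intros k l. specialize (Hrem (p0 + r) k l).
    replace (p0 + r - p0) with r in Hrem by ring.
    rewrite Rabs_pos_eq in Hrem by lra. specialize (Hrem (Rle_refl r)).
    pose proof (Rabs_pos (e (p0 + r) k l - e p0 k l - r * D k l)).
    assert (0 < r ^ 2) by (apply pow_lt; lra). nra. }
  replace (z2sum D) with (z2sum D + z2sum (fun _ _ => 0) * 0) by ring.
  apply (is_derive_z2sum_comp (fun p _ => e p) (fun _ => 0) D (fun _ _ => 0) M p0 0 r); auto.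
  - apply is_derive_Reals, derivable_pt_lim_const.
  - exists 1, 0. split; [lra |]. intros. rewrite Rabs_R0. lra.
  - intros p q k l Hp _. rewrite Rmult_0_r, Rminus_0_r.
    eapply Rle_trans; [apply Hrem; auto |].
    apply Rmult_le_compat_l; auto. pose proof (pow2_ge_0 (q - 0)). lra.
Qed.

(** * The summands on the line [c1 + x c2 = 1/2] *)

Ltac push_IZR := repeat rewrite ?plus_IZR, ?minus_IZR, ?opp_IZR, ?mult_IZR.

(** With [u = k + c1], [v = l + c2] the exponent of [theta] is [(u + x v)^2 + y^2 v^2], and
    [u + x v = k + x l + 1/2]. *)
Definition theta_quad (x y s K L : R) : R := (K + x * L + 1/2) ^ 2 + y ^ 2 * (L + s) ^ 2.

Definition theta_term (a x y s : R) (k l : Z) : R :=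
  exp (- (PI * a / y * theta_quad x y s (IZR k) (IZR l))).

Lemma theta_as_z2sum a x y c1 c2 :
  c1 + x * c2 = 1/2 -> theta x y c1 c2 a = z2sum (theta_term a x y c2).
Proof.
  intros H. apply z2sum_ext. intros k l. unfold theta_term, theta_quad. f_equal.
  replace c1 with (1/2 - x * c2) by lra. ring.
Qed.

Definition hat_quad (x y K L : R) : R := K ^ 2 + 2 * x * K * L + (x ^ 2 + y ^ 2) * L ^ 2.

(** [k c2 - l c1 = (k + x l) c2 - l/2] on the line. *)
Definition hat_phase (x s K L : R) : R := 2 * PI * ((K + x * L) * s - L / 2).

Definition thetahat_term (a x y s : R) (k l : Z) : R :=
  exp (- (PI * a / y * hat_quad x y (IZR k) (IZR l))) * cos (hat_phase x s (IZR k) (IZR l)).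

Lemma thetahat_re_as_z2sum a x y c1 c2 :
  c1 + x * c2 = 1/2 -> thetahat_re x y c1 c2 a = z2sum (thetahat_term a x y c2).
Proof.
  intros H. apply z2sum_ext. intros k l. unfold thetahat_term, gw, hat_quad, hat_phase.
  f_equal; f_equal; [ring |]. replace c1 with (1/2 - x * c2) by lra. field.
Qed.

Lemma hat_quad_lower_bound x y K L :
  0 < y -> (K ^ 2 + L ^ 2) / (2 + (2 * x ^ 2 + 1) / y ^ 2) <= hat_quad x y K L.
Proof.
  intros Hy. assert (Hy2 : 0 < y ^ 2) by nra.
  assert (Hc : 0 <= (2 * x ^ 2 + 1) / y ^ 2) by (apply Rle_div_r; nra).
  set (m := 2 + (2 * x ^ 2 + 1) / y ^ 2).
  apply (Rmult_le_reg_l m); [unfold m; lra |].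
  unfold Rdiv. rewrite <- Rmult_assoc, (Rmult_comm m), Rmult_assoc, Rinv_r, Rmult_1_r by (unfold m; lra).
  assert (K ^ 2 <= 2 * (K + x * L) ^ 2 + 2 * x ^ 2 * L ^ 2)
    by (pose proof (pow2_ge_0 (K + 2 * x * L)); nra).
  replace (m * hat_quad x y K L) with
    (2 * (K + x * L) ^ 2 + 2 * y ^ 2 * L ^ 2 + (2 * x ^ 2 + 1) / y ^ 2 * (K + x * L) ^ 2
     + (2 * x ^ 2 + 1) * L ^ 2) by (unfold m, hat_quad; field; lra).
  assert (0 <= (2 * x ^ 2 + 1) / y ^ 2 * (K + x * L) ^ 2) by (apply Rmult_le_pos; auto using pow2_ge_0).
  pose proof (pow2_ge_0 L). nra.
Qed.

Lemma thetahat_im_eq0 x y c1 c2 a : 0 < y -> 0 < a -> thetahat_im x y c1 c2 a = 0.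
Proof.
  intros Hy Ha. assert (Hb : 0 < PI * a / y) by (apply Rdiv_lt_0_compat; auto; pose proof PI_RGT_0; nra).
  assert (Hm : 0 < 2 + (2 * x ^ 2 + 1) / y ^ 2)
    by (assert (0 <= (2 * x ^ 2 + 1) / y ^ 2) by (apply Rle_div_r; nra); lra).
  apply z2sum_eq0_opp_odd.
  - apply (gauss_dom_le _ (fun k l => exp (- (PI * a / y * hat_quad x y (IZR k) (IZR l))))).
    + apply (gauss_dom_exp _ (PI * a / y / (2 + (2 * x ^ 2 + 1) / y ^ 2)) 0);
        [apply Rdiv_lt_0_compat; auto |].
      intros k l. rewrite Rminus_0_r. unfold Rdiv at 1. rewrite Rmult_assoc, (Rmult_comm (/ _)).
      apply Rmult_le_compat_l; [lra | apply hat_quad_lower_bound; auto].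
    + intros k l. assert (0 < gw x y a k l) by apply exp_pos.
      replace (exp (- (PI * a / y * hat_quad x y (IZR k) (IZR l)))) with (gw x y a k l)
        by (unfold gw, hat_quad; f_equal; ring).
      rewrite Rabs_mult, !(Rabs_pos_eq (gw x y a k l)) by lra.
      assert (Rabs (sin (2 * PI * (IZR k * c2 - IZR l * c1))) <= 1) by (apply Rabs_le, SIN_bound).
      pose proof (Rabs_pos (sin (2 * PI * (IZR k * c2 - IZR l * c1)))). nra.
  - intros k l. unfold gw. rewrite !opp_IZR.
    replace (2 * PI * (- IZR k * c2 - - IZR l * c1)) with (- (2 * PI * (IZR k * c2 - IZR l * c1))) by ring.
    rewrite sin_neg.
    replace ((- IZR k) ^ 2 + 2 * x * - IZR k * - IZR l + (x ^ 2 + y ^ 2) * (- IZR l) ^ 2)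
      with (IZR k ^ 2 + 2 * x * IZR k * IZR l + (x ^ 2 + y ^ 2) * IZR l ^ 2) by ring.
    ring.
Qed.

Lemma quad_lower_bound (K L x s c Y : R) : Rabs x <= 3/2 -> Rabs s <= 2 -> Rabs c <= 1 -> 1/4 <= Y ->
  (K ^ 2 + L ^ 2) / 62 - 2 <= (K + x * L + c) ^ 2 + Y * (L + s) ^ 2.
Proof.
  intros Hx Hs Hc HY. apply Rabs_le_between in Hx, Hs, Hc.
  set (u := K + x * L + c). set (v := L + s).
  assert (HK : K = u - x * L - c) by (unfold u; ring). assert (HL : L = v - s) by (unfold v; ring).
  assert (L ^ 2 <= 2 * v ^ 2 + 8) by (rewrite HL; pose proof (pow2_ge_0 (v + s)); nra).
  assert (K ^ 2 <= 3 * u ^ 2 + 3 * x ^ 2 * L ^ 2 + 3).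
  { assert (Hc2 : c ^ 2 <= 1) by nra.
    assert (T : forall p q r : R, (p - q - r) ^ 2 <= 3 * (p ^ 2 + q ^ 2 + r ^ 2)).
    { intros p q r. pose proof (pow2_ge_0 (p + q)). pose proof (pow2_ge_0 (p + r)).
      pose proof (pow2_ge_0 (q - r)). nra. }
    rewrite HK. specialize (T u (x * L) c). replace ((x * L) ^ 2) with (x ^ 2 * L ^ 2) in T by ring.
    lra. }
  assert (x ^ 2 <= 9/4) by nra.
  assert (x ^ 2 * L ^ 2 <= 9/4 * L ^ 2) by (apply Rmult_le_compat_r; auto using pow2_ge_0).
  assert (v ^ 2 <= 4 * Y * v ^ 2) by (pose proof (pow2_ge_0 v); nra).
  pose proof (pow2_ge_0 u). nra.
Qed.

Lemma pow2_le_Rabs d : Rabs d <= 1 -> d ^ 2 <= Rabs d.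
Proof. intros H. rewrite pow2_Rabs. pose proof (Rabs_pos d). nra. Qed.

Lemma sum_Rabs_pow2_le dx ds : (Rabs dx + Rabs ds) ^ 2 <= 2 * (dx ^ 2 + ds ^ 2).
Proof. rewrite (pow2_Rabs dx), (pow2_Rabs ds). pose proof (pow2_ge_0 (Rabs dx - Rabs ds)). nra. Qed.

Lemma sum_Rabs_pow2_scale_le W E dx ds : 0 <= W -> 0 <= E ->
  W * (Rabs dx + Rabs ds) ^ 2 * E <= E * (2 * W) * (dx ^ 2 + ds ^ 2).
Proof.
  intros HW HE. pose proof (sum_Rabs_pow2_le dx ds).
  replace (W * (Rabs dx + Rabs ds) ^ 2 * E) with ((E * W) * (Rabs dx + Rabs ds) ^ 2) by ring.
  replace (E * (2 * W) * (dx ^ 2 + ds ^ 2)) with ((E * W) * (2 * (dx ^ 2 + ds ^ 2))) by ring.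
  apply Rmult_le_compat_l; auto. apply Rmult_le_pos; auto.
Qed.

Lemma Rabs_exp_cos_le Q F : Rabs (exp (- Q) * cos F) <= exp (- Q) * 1.
Proof.
  rewrite Rabs_mult, Rabs_pos_eq by (apply Rlt_le, exp_pos).
  apply Rmult_le_compat_l; [apply Rlt_le, exp_pos | apply Rabs_le, COS_bound].
Qed.

Lemma Rabs_quadratic2_le (A B C D dx ds : R) : Rabs dx <= 1 -> Rabs ds <= 1 -> 0 <= B -> 0 <= D ->
  Rabs (A * dx + B * dx ^ 2 + C * ds + D * ds ^ 2) <= (Rabs A + B + Rabs C + D) * (Rabs dx + Rabs ds).
Proof.
  intros H1 H2 HB HD.
  eapply Rle_trans; [apply Rabs_triang |]. eapply Rle_trans; [apply Rplus_le_compat_r, Rabs_triang |].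
  eapply Rle_trans; [apply Rplus_le_compat_r, Rplus_le_compat_r, Rabs_triang |].
  rewrite !Rabs_mult, (Rabs_pos_eq B), (Rabs_pos_eq D), !(Rabs_pos_eq (_ ^ 2)) by (auto; apply pow2_ge_0).
  pose proof (pow2_le_Rabs dx H1). pose proof (pow2_le_Rabs ds H2).
  pose proof (Rabs_pos A). pose proof (Rabs_pos C). pose proof (Rabs_pos dx). pose proof (Rabs_pos ds).
  assert (Rabs A * Rabs dx <= Rabs A * (Rabs dx + Rabs ds)) by (apply Rmult_le_compat_l; lra).
  assert (Rabs C * Rabs ds <= Rabs C * (Rabs dx + Rabs ds)) by (apply Rmult_le_compat_l; lra).
  assert (B * dx ^ 2 <= B * (Rabs dx + Rabs ds)) by (apply Rmult_le_compat_l; lra).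
  assert (D * ds ^ 2 <= D * (Rabs dx + Rabs ds)) by (apply Rmult_le_compat_l; lra).
  lra.
Qed.

Lemma Rabs_square2_le (B D dx ds : R) : 0 <= B -> 0 <= D ->
  Rabs (B * dx ^ 2 + D * ds ^ 2) <= (B + D) * (Rabs dx + Rabs ds) ^ 2.
Proof.
  intros HB HD. rewrite Rabs_pos_eq by (pose proof (pow2_ge_0 dx); pose proof (pow2_ge_0 ds); nra).
  rewrite (pow2_Rabs dx), (pow2_Rabs ds). pose proof (Rabs_pos dx). pose proof (Rabs_pos ds).
  assert (Rabs dx * Rabs dx <= (Rabs dx + Rabs ds) ^ 2) by nra.
  assert (Rabs ds * Rabs ds <= (Rabs dx + Rabs ds) ^ 2) by nra.
  assert (B * (Rabs dx * Rabs dx) <= B * (Rabs dx + Rabs ds) ^ 2) by (apply Rmult_le_compat_l; lra).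
  assert (D * (Rabs ds * Rabs ds) <= D * (Rabs dx + Rabs ds) ^ 2) by (apply Rmult_le_compat_l; lra).
  lra.
Qed.

Lemma Rabs_bilinear_le (A C E dx ds : R) : Rabs dx <= 1 -> Rabs ds <= 1 ->
  Rabs (A * dx + C * ds + E * (dx * ds)) <= (Rabs A + Rabs C + Rabs E) * (Rabs dx + Rabs ds).
Proof.
  intros H1 H2. eapply Rle_trans; [apply Rabs_triang |].
  eapply Rle_trans; [apply Rplus_le_compat_r, Rabs_triang |].
  rewrite !Rabs_mult. pose proof (Rabs_pos A). pose proof (Rabs_pos C). pose proof (Rabs_pos E).
  pose proof (Rabs_pos dx). pose proof (Rabs_pos ds).
  assert (Rabs A * Rabs dx <= Rabs A * (Rabs dx + Rabs ds)) by (apply Rmult_le_compat_l; lra).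
  assert (Rabs C * Rabs ds <= Rabs C * (Rabs dx + Rabs ds)) by (apply Rmult_le_compat_l; lra).
  assert (Rabs dx * Rabs ds <= Rabs dx + Rabs ds) by nra.
  assert (Rabs E * (Rabs dx * Rabs ds) <= Rabs E * (Rabs dx + Rabs ds)) by (apply Rmult_le_compat_l; lra).
  lra.
Qed.

Lemma Rabs_cross_le (E dx ds : R) : Rabs (E * (dx * ds)) <= Rabs E * (Rabs dx + Rabs ds) ^ 2.
Proof.
  rewrite !Rabs_mult. pose proof (Rabs_pos E). pose proof (Rabs_pos dx). pose proof (Rabs_pos ds).
  apply Rmult_le_compat_l; auto. nra.
Qed.

Lemma Rabs_cos_sin_le u v F : Rabs (u * cos F + sin F * v) <= Rabs u + Rabs v.
Proof.
  eapply Rle_trans; [apply Rabs_triang |]. rewrite !Rabs_mult.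
  assert (Rabs (cos F) <= 1) by (apply Rabs_le, COS_bound).
  assert (Rabs (sin F) <= 1) by (apply Rabs_le, SIN_bound).
  pose proof (Rabs_pos u). pose proof (Rabs_pos v). pose proof (Rabs_pos (cos F)). pose proof (Rabs_pos (sin F)).
  nra.
Qed.

Lemma cos_shift_2PI x n : cos (x + 2 * PI * IZR n) = cos x.
Proof.
  destruct (Z_le_gt_dec 0 n) as [Hn | Hn].
  - rewrite <- (cos_period x (Z.to_nat n)), INR_IZR_INZ, Z2Nat.id by auto. f_equal. ring.
  - rewrite <- (cos_period (x + 2 * PI * IZR n) (Z.to_nat (- n))), INR_IZR_INZ, Z2Nat.id by lia.
    f_equal. rewrite opp_IZR. ring.
Qed.

Lemma sin_shift_2PI x n : sin (x + 2 * PI * IZR n) = sin x.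
Proof.
  destruct (Z_le_gt_dec 0 n) as [Hn | Hn].
  - rewrite <- (sin_period x (Z.to_nat n)), INR_IZR_INZ, Z2Nat.id by auto. f_equal. ring.
  - rewrite <- (sin_period (x + 2 * PI * IZR n) (Z.to_nat (- n))), INR_IZR_INZ, Z2Nat.id by lia.
    f_equal. rewrite opp_IZR. ring.
Qed.

(** * Vanishing of the partial derivatives at [(1/2, sqrt 3 / 2)] *)

Section HexagonalPointX.

Variables (a y0 : R).
Hypothesis Ha : 0 < a.
Hypothesis Hy0 : 0 < y0.
Hypothesis Hy02 : y0 ^ 2 = 3 / 4.

Let beta := PI * a / y0.

Lemma beta_pos : 0 < beta.
Proof. unfold beta. apply Rdiv_lt_0_compat; auto. pose proof PI_RGT_0. nra. Qed.

Let envelope (k l : Z) : R := exp (- (beta / 62 * sqnorm k l - 2 * beta)).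

Lemma exp_le_envelope (Q : R) k l :
  beta / 62 * sqnorm k l - 2 * beta <= Q -> exp (- Q) <= envelope k l.
Proof. intros H. apply exp_le. lra. Qed.

Lemma gauss_dom_exp_beta (Q W : Z -> Z -> R) :
  (forall k l, beta / 62 * sqnorm k l - 2 * beta <= Q k l) -> moderate W ->
  gauss_dom (fun k l => exp (- Q k l) * W k l).
Proof. intros HQ HW. apply (gauss_dom_exp_moderate Q W (beta / 62) (2 * beta)); auto. pose proof beta_pos; lra. Qed.

Lemma gauss_dom_envelope (W : Z -> Z -> R) : moderate W -> gauss_dom (fun k l => envelope k l * W k l).
Proof. intros HW. apply gauss_dom_exp_beta; auto. intros; lra. Qed.

Section ThetaX.

Lemma theta_quad_x_lower_bound x q k l : Rabs (x - 1/2) <= 1 -> Rabs (q - 1/3) <= 1 ->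
  beta / 62 * sqnorm k l - 2 * beta <= beta * theta_quad x y0 q (IZR k) (IZR l).
Proof.
  intros H1 H2. pose proof beta_pos. apply Rabs_le_between in H1, H2.
  pose proof (quad_lower_bound (IZR k) (IZR l) x q (1/2) (y0 ^ 2)) as X.
  assert (Rabs x <= 3/2) by (apply Rabs_le; lra). assert (Rabs q <= 2) by (apply Rabs_le; lra).
  assert (Rabs (1/2) <= 1) by (rewrite Rabs_pos_eq; lra).
  specialize (X ltac:(auto) ltac:(auto) ltac:(auto) ltac:(lra)).
  apply (Rmult_le_compat_l beta) in X; [| lra].
  unfold theta_quad, sqnorm. lra.
Qed.

Let Q (x q : R) (k l : Z) := beta * theta_quad x y0 q (IZR k) (IZR l).
Let Q0 (k l : Z) := Q (1/2) (1/3) k l.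
Let m0 (k l : Z) := IZR k + IZR l / 2 + 1/2.
Let w0 (k l : Z) := IZR l + 1/3.
Let Q1 (dx ds : R) (k l : Z) := beta * (2 * m0 k l * IZR l) * dx + beta * (2 * y0 ^ 2 * w0 k l) * ds.
Let Dx (k l : Z) := exp (- Q0 k l) * (- (beta * (2 * m0 k l * IZR l))).
Let Dq (k l : Z) := exp (- Q0 k l) * (- (beta * (2 * y0 ^ 2 * w0 k l))).
Let P1 (k l : Z) := beta * (Rabs (2 * m0 k l * IZR l) + IZR l ^ 2 + Rabs (2 * y0 ^ 2 * w0 k l) + y0 ^ 2).
Let P2 (k l : Z) := beta * (IZR l ^ 2 + y0 ^ 2).
Let M (k l : Z) := envelope k l * (2 * (P1 k l ^ 2 + P2 k l)).

Lemma theta_x_base_lower_bound k l : beta / 62 * sqnorm k l - 2 * beta <= Q0 k l.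
Proof. apply theta_quad_x_lower_bound; rewrite Rminus_diag_eq, Rabs_R0; lra. Qed.

Lemma gauss_dom_theta_term x q :
  Rabs (x - 1/2) <= 1 -> Rabs (q - 1/3) <= 1 -> gauss_dom (theta_term a x y0 q).
Proof.
  intros H1 H2. apply (gauss_dom_le _ (fun k l => exp (- Q x q k l) * 1)).
  - apply gauss_dom_exp_beta; [intros; apply theta_quad_x_lower_bound; auto | apply moderate_const].
  - intros k l. rewrite Rmult_1_r. right. reflexivity.
Qed.

Lemma theta_x_gauss_dom_Dx : gauss_dom Dx.
Proof. apply gauss_dom_exp_beta; [apply theta_x_base_lower_bound | unfold m0; solve_moderate]. Qed.

Lemma theta_x_gauss_dom_Dq : gauss_dom Dq.
Proof. apply gauss_dom_exp_beta; [apply theta_x_base_lower_bound | unfold w0; solve_moderate]. Qed.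

Lemma theta_x_gauss_dom_M : gauss_dom M.
Proof. apply gauss_dom_envelope. unfold P1, P2, m0, w0. solve_moderate. Qed.

Lemma theta_x_exponent_increment x q k l : Rabs (x - 1/2) <= 1 -> Rabs (q - 1/3) <= 1 ->
  Rabs (Q x q k l - Q0 k l) <= P1 k l * (Rabs (x - 1/2) + Rabs (q - 1/3)) /\
  Rabs (Q x q k l - Q0 k l - Q1 (x - 1/2) (q - 1/3) k l) <= P2 k l * (Rabs (x - 1/2) + Rabs (q - 1/3)) ^ 2.
Proof.
  intros H1 H2. pose proof beta_pos. pose proof (pow2_ge_0 (IZR l)). pose proof (pow2_ge_0 y0).
  set (dx := x - 1/2) in *. set (ds := q - 1/3) in *.
  assert (HQ : Q x q k l - Q0 k l = (beta * (2 * m0 k l * IZR l)) * dx + (beta * IZR l ^ 2) * dx ^ 2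
                                  + (beta * (2 * y0 ^ 2 * w0 k l)) * ds + (beta * y0 ^ 2) * ds ^ 2)
    by (unfold Q0, Q, theta_quad, m0, w0, dx, ds; field).
  split.
  - rewrite HQ. eapply Rle_trans; [apply Rabs_quadratic2_le; auto; nra |].
    unfold P1. rewrite !Rabs_mult, (Rabs_pos_eq beta) by lra. right. ring.
  - replace (Q x q k l - Q0 k l - Q1 dx ds k l) with ((beta * IZR l ^ 2) * dx ^ 2 + (beta * y0 ^ 2) * ds ^ 2)
      by (rewrite HQ; unfold Q1; ring).
    eapply Rle_trans; [apply Rabs_square2_le; nra |]. unfold P2. right; ring.
Qed.

Lemma theta_term_expansion_x x q k l : Rabs (x - 1/2) <= 1 -> Rabs (q - 1/3) <= 1 ->
  Rabs (theta_term a x y0 q k l - theta_term a (1/2) y0 (1/3) k l - (x - 1/2) * Dx k l - (q - 1/3) * Dq k l)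
   <= M k l * ((x - 1/2) ^ 2 + (q - 1/3) ^ 2).
Proof.
  intros H1 H2. destruct (theta_x_exponent_increment x q k l H1 H2) as [B1 B2].
  replace (theta_term a x y0 q k l - theta_term a (1/2) y0 (1/3) k l - (x - 1/2) * Dx k l - (q - 1/3) * Dq k l)
    with (exp (- Q x q k l) - exp (- Q0 k l) + exp (- Q0 k l) * Q1 (x - 1/2) (q - 1/3) k l)
    by (unfold theta_term, Dx, Dq, Q0, Q, Q1, beta; cbv beta; ring).
  eapply Rle_trans.
  { apply (exp_neg_expansion (Q x q k l) (Q0 k l) (Q1 (x - 1/2) (q - 1/3) k l) (P1 k l) (P2 k l)
      (Rabs (x - 1/2) + Rabs (q - 1/3)) (envelope k l)); auto; [| apply exp_le_envelope ..].
    - pose proof (Rabs_pos (x - 1/2)). pose proof (Rabs_pos (q - 1/3)). lra.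
    - apply theta_quad_x_lower_bound; auto.
    - apply theta_x_base_lower_bound. }
  apply sum_Rabs_pow2_scale_le; [| apply Rlt_le, exp_pos].
  pose proof (pow2_ge_0 (P1 k l)). pose proof beta_pos. pose proof (pow2_ge_0 (IZR l)). pose proof (pow2_ge_0 y0).
  unfold P2. nra.
Qed.

(** [(k, l) -> (-k-l-1, l)] fixes [Q0] and negates [m0]. *)
Lemma theta_x_z2sum_Dx : z2sum Dx = 0.
Proof.
  apply (z2sum_eq0_reflect_odd Dx (-1)); [apply theta_x_gauss_dom_Dx |]. intros k l.
  unfold Dx, Q0, Q, m0, theta_quad. push_IZR.
  replace (beta * ((- IZR k - IZR l + -1 + 1 / 2 * IZR l + 1 / 2) ^ 2 + y0 ^ 2 * (IZR l + 1 / 3) ^ 2))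
    with (beta * ((IZR k + 1 / 2 * IZR l + 1 / 2) ^ 2 + y0 ^ 2 * (IZR l + 1 / 3) ^ 2)) by field.
  field.
Qed.

Lemma is_derive_theta_x (s : R -> R) : s (1/2) = 1/3 -> is_derive s (1/2) 0 ->
  is_derive (fun x => z2sum (theta_term a x y0 (s x))) (1/2) 0.
Proof.
  intros Hs Hds.
  cut (is_derive (fun x => z2sum (theta_term a x y0 (s x))) (1/2) (z2sum Dx + z2sum Dq * 0));
    [rewrite theta_x_z2sum_Dx, Rmult_0_r, Rplus_0_r; auto |].
  apply (is_derive_z2sum_comp (fun x q => theta_term a x y0 q) s Dx Dq M (1/2) (1/3) 1);
    auto using gauss_dom_theta_term, theta_x_gauss_dom_Dx, theta_x_gauss_dom_Dq, theta_x_gauss_dom_M, theta_term_expansion_x; lra.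
Qed.

End ThetaX.
Section HatX.

Lemma hat_quad_x_lower_bound x k l : Rabs (x - 1/2) <= 1 ->
  beta / 62 * sqnorm k l - 2 * beta <= beta * hat_quad x y0 (IZR k) (IZR l).
Proof.
  intros H1. pose proof beta_pos. apply Rabs_le_between in H1.
  pose proof (quad_lower_bound (IZR k) (IZR l) x 0 0 (y0 ^ 2)) as X.
  assert (Rabs x <= 3/2) by (apply Rabs_le; lra).
  rewrite Rabs_R0 in X. specialize (X ltac:(auto) ltac:(lra) ltac:(lra) ltac:(lra)).
  apply (Rmult_le_compat_l beta) in X; [| lra].
  replace (hat_quad x y0 (IZR k) (IZR l)) with ((IZR k + x * IZR l + 0) ^ 2 + y0 ^ 2 * (IZR l + 0) ^ 2)
    by (unfold hat_quad; ring).
  unfold sqnorm. lra.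
Qed.

Let Q (x : R) (k l : Z) := beta * hat_quad x y0 (IZR k) (IZR l).
Let Q0 (k l : Z) := Q (1/2) k l.
Let F (x q : R) (k l : Z) := hat_phase x q (IZR k) (IZR l).
Let F0 (k l : Z) := F (1/2) (1/3) k l.
Let m0 (k l : Z) := IZR k + IZR l / 2.
Let Q1 (dx : R) (k l : Z) := beta * (2 * m0 k l * IZR l) * dx.
Let F1 (dx ds : R) (k l : Z) := 2 * PI * (IZR l / 3) * dx + 2 * PI * m0 k l * ds.
Let Dx (k l : Z) := exp (- Q0 k l)
  * (- (beta * (2 * m0 k l * IZR l) * cos (F0 k l) + sin (F0 k l) * (2 * PI * (IZR l / 3)))).
Let Dq (k l : Z) := exp (- Q0 k l) * (- (sin (F0 k l) * (2 * PI * m0 k l))).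
Let P1 (k l : Z) := beta * (Rabs (2 * m0 k l * IZR l) + IZR l ^ 2).
Let P2 (k l : Z) := beta * IZR l ^ 2.
Let R1 (k l : Z) := Rabs (2 * PI * (IZR l / 3)) + Rabs (2 * PI * m0 k l) + Rabs (2 * PI * IZR l).
Let R2 (k l : Z) := Rabs (2 * PI * IZR l).
Let W (k l : Z) := P1 k l ^ 2 + P2 k l + R1 k l ^ 2 + R2 k l + P1 k l * R1 k l.
Let M (k l : Z) := envelope k l * (2 * W k l).

Lemma hat_x_base_lower_bound k l : beta / 62 * sqnorm k l - 2 * beta <= Q0 k l.
Proof. apply hat_quad_x_lower_bound; rewrite Rminus_diag_eq, Rabs_R0; lra. Qed.

Lemma gauss_dom_thetahat_term x q : Rabs (x - 1/2) <= 1 -> gauss_dom (thetahat_term a x y0 q).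
Proof.
  intros H1. apply (gauss_dom_le _ (fun k l => exp (- Q x k l) * 1)).
  - apply gauss_dom_exp_beta; [intros; apply hat_quad_x_lower_bound; auto | apply moderate_const].
  - intros k l. rewrite (Rabs_pos_eq (_ * 1)) by (rewrite Rmult_1_r; apply Rlt_le, exp_pos).
    apply Rabs_exp_cos_le.
Qed.

Lemma hat_x_gauss_dom_Dx : gauss_dom Dx.
Proof.
  apply (gauss_dom_le _ (fun k l => exp (- Q0 k l) * (Rabs (beta * (2 * m0 k l * IZR l)) + Rabs (2 * PI * (IZR l / 3))))).
  - apply gauss_dom_exp_beta; [apply hat_x_base_lower_bound | unfold m0; solve_moderate].
  - intros k l. unfold Dx. rewrite !(Rabs_mult (exp _)), Rabs_Ropp.
    pose proof (Rabs_pos (beta * (2 * m0 k l * IZR l))). pose proof (Rabs_pos (2 * PI * (IZR l / 3))).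
    rewrite (Rabs_pos_eq (Rabs (beta * (2 * m0 k l * IZR l)) + Rabs (2 * PI * (IZR l / 3)))) by lra.
    apply Rmult_le_compat_l; [apply Rabs_pos | apply Rabs_cos_sin_le].
Qed.

Lemma hat_x_gauss_dom_Dq : gauss_dom Dq.
Proof.
  apply (gauss_dom_le _ (fun k l => exp (- Q0 k l) * Rabs (2 * PI * m0 k l))).
  - apply gauss_dom_exp_beta; [apply hat_x_base_lower_bound | unfold m0; solve_moderate].
  - intros k l. unfold Dq. rewrite !(Rabs_mult (exp _)), Rabs_Ropp, Rabs_Rabsolu, Rabs_mult.
    apply Rmult_le_compat_l; [apply Rabs_pos |].
    assert (Rabs (sin (F0 k l)) <= 1) by (apply Rabs_le, SIN_bound).
    pose proof (Rabs_pos (sin (F0 k l))). pose proof (Rabs_pos (2 * PI * m0 k l)). nra.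
Qed.

Lemma hat_x_gauss_dom_M : gauss_dom M.
Proof. apply gauss_dom_envelope. unfold W, P1, P2, R1, R2, m0. solve_moderate. Qed.

Lemma hat_x_exponent_increment x q k l : Rabs (x - 1/2) <= 1 -> Rabs (q - 1/3) <= 1 ->
  Rabs (Q x k l - Q0 k l) <= P1 k l * (Rabs (x - 1/2) + Rabs (q - 1/3)) /\
  Rabs (Q x k l - Q0 k l - Q1 (x - 1/2) k l) <= P2 k l * (Rabs (x - 1/2) + Rabs (q - 1/3)) ^ 2.
Proof.
  intros H1 H2. pose proof beta_pos. pose proof (pow2_ge_0 (IZR l)).
  set (dx := x - 1/2) in *. set (ds := q - 1/3) in *.
  assert (HQ : Q x k l - Q0 k l = (beta * (2 * m0 k l * IZR l)) * dx + (beta * IZR l ^ 2) * dx ^ 2 + 0 * ds + 0 * ds ^ 2)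
    by (unfold Q0, Q, hat_quad, m0, dx; field).
  split.
  - rewrite HQ. eapply Rle_trans; [apply Rabs_quadratic2_le; auto; nra |].
    unfold P1. rewrite Rabs_R0, !Rabs_mult, (Rabs_pos_eq beta) by lra. right. ring.
  - replace (Q x k l - Q0 k l - Q1 dx k l) with ((beta * IZR l ^ 2) * dx ^ 2 + 0 * ds ^ 2)
      by (rewrite HQ; unfold Q1; ring).
    eapply Rle_trans; [apply Rabs_square2_le; nra |]. unfold P2. right; ring.
Qed.

Lemma hat_x_phase_increment x q k l : Rabs (x - 1/2) <= 1 -> Rabs (q - 1/3) <= 1 ->
  Rabs (F x q k l - F0 k l) <= R1 k l * (Rabs (x - 1/2) + Rabs (q - 1/3)) /\
  Rabs (F x q k l - F0 k l - F1 (x - 1/2) (q - 1/3) k l) <= R2 k l * (Rabs (x - 1/2) + Rabs (q - 1/3)) ^ 2.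
Proof.
  intros H1 H2. set (dx := x - 1/2) in *. set (ds := q - 1/3) in *.
  assert (HF : F x q k l - F0 k l
             = (2 * PI * (IZR l / 3)) * dx + (2 * PI * m0 k l) * ds + (2 * PI * IZR l) * (dx * ds))
    by (unfold F0, F, hat_phase, m0, dx, ds; field).
  split.
  - rewrite HF. eapply Rle_trans; [apply Rabs_bilinear_le; auto |]. unfold R1. right; ring.
  - replace (F x q k l - F0 k l - F1 dx ds k l) with ((2 * PI * IZR l) * (dx * ds))
      by (rewrite HF; unfold F1; ring).
    apply Rabs_cross_le.
Qed.

Lemma thetahat_term_expansion_x x q k l : Rabs (x - 1/2) <= 1 -> Rabs (q - 1/3) <= 1 ->
  Rabs (thetahat_term a x y0 q k l - thetahat_term a (1/2) y0 (1/3) k l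
        - (x - 1/2) * Dx k l - (q - 1/3) * Dq k l)
   <= M k l * ((x - 1/2) ^ 2 + (q - 1/3) ^ 2).
Proof.
  intros H1 H2. destruct (hat_x_exponent_increment x q k l H1 H2) as [B1 B2].
  destruct (hat_x_phase_increment x q k l H1 H2) as [C1 C2].
  replace (thetahat_term a x y0 q k l - thetahat_term a (1/2) y0 (1/3) k l - (x - 1/2) * Dx k l - (q - 1/3) * Dq k l)
    with (exp (- Q x k l) * cos (F x q k l) - exp (- Q0 k l) * cos (F0 k l)
          - (- exp (- Q0 k l) * Q1 (x - 1/2) k l * cos (F0 k l)
             - exp (- Q0 k l) * sin (F0 k l) * F1 (x - 1/2) (q - 1/3) k l))
    by (unfold thetahat_term, Dx, Dq, Q0, Q, Q1, F0, F, F1, beta; cbv beta; ring).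
  eapply Rle_trans.
  { apply (exp_neg_cos_expansion (Q x k l) (Q0 k l) (Q1 (x - 1/2) k l) (P1 k l) (P2 k l)
      (F x q k l) (F0 k l) (F1 (x - 1/2) (q - 1/3) k l) (R1 k l) (R2 k l)
      (Rabs (x - 1/2) + Rabs (q - 1/3)) (envelope k l)); auto; [| apply exp_le_envelope ..].
    - pose proof (Rabs_pos (x - 1/2)). pose proof (Rabs_pos (q - 1/3)). lra.
    - apply hat_quad_x_lower_bound; auto.
    - apply hat_x_base_lower_bound. }
  apply sum_Rabs_pow2_scale_le; [| apply Rlt_le, exp_pos].
  pose proof beta_pos. pose proof (pow2_ge_0 (IZR l)).
  assert (0 <= P1 k l) by (unfold P1; pose proof (Rabs_pos (2 * m0 k l * IZR l)); nra).
  assert (0 <= R1 k l) by (unfold R1; pose proof (Rabs_pos (2 * PI * (IZR l / 3)));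
    pose proof (Rabs_pos (2 * PI * m0 k l)); pose proof (Rabs_pos (2 * PI * IZR l)); lra).
  pose proof (Rabs_pos (2 * PI * IZR l)). pose proof (pow2_ge_0 (P1 k l)). pose proof (pow2_ge_0 (R1 k l)).
  unfold W, P2, R2. nra.
Qed.

(** [(k, l) -> (-k-l, l)] fixes [Q0] and negates [m0] and [F0] modulo [2 pi]. *)
Lemma hat_x_z2sum_Dx : z2sum Dx = 0.
Proof.
  apply (z2sum_eq0_reflect_odd Dx 0); [apply hat_x_gauss_dom_Dx |]. intros k l.
  unfold Dx, Q0, Q, F0, F, m0, hat_quad.
  replace (IZR (- k - l + 0)) with (- IZR k - IZR l) by (push_IZR; ring).
  replace (hat_phase (1/2) (1/3) (- IZR k - IZR l) (IZR l))
    with (- hat_phase (1/2) (1/3) (IZR k) (IZR l) + 2 * PI * IZR (- l)) by (unfold hat_phase; push_IZR; field).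
  rewrite cos_shift_2PI, sin_shift_2PI, cos_neg, sin_neg.
  replace (beta * ((- IZR k - IZR l) ^ 2 + 2 * (1 / 2) * (- IZR k - IZR l) * IZR l + ((1 / 2) ^ 2 + y0 ^ 2) * IZR l ^ 2))
    with (beta * (IZR k ^ 2 + 2 * (1 / 2) * IZR k * IZR l + ((1 / 2) ^ 2 + y0 ^ 2) * IZR l ^ 2)) by field.
  field.
Qed.

Lemma is_derive_thetahat_x (s : R -> R) : s (1/2) = 1/3 -> is_derive s (1/2) 0 ->
  is_derive (fun x => z2sum (thetahat_term a x y0 (s x))) (1/2) 0.
Proof.
  intros Hs Hds.
  cut (is_derive (fun x => z2sum (thetahat_term a x y0 (s x))) (1/2) (z2sum Dx + z2sum Dq * 0));
    [rewrite hat_x_z2sum_Dx, Rmult_0_r, Rplus_0_r; auto |].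
  apply (is_derive_z2sum_comp (fun x q => thetahat_term a x y0 q) s Dx Dq M (1/2) (1/3) 1);
    auto using gauss_dom_thetahat_term, hat_x_gauss_dom_Dx, hat_x_gauss_dom_Dq, hat_x_gauss_dom_M,
      thetahat_term_expansion_x; lra.
Qed.

End HatX.

End HexagonalPointX.

Lemma Rabs_mult_le (d G C : R) : Rabs G <= C -> Rabs (d * G) <= C * Rabs d.
Proof. intros H. rewrite Rabs_mult, Rmult_comm. apply Rmult_le_compat_r; auto using Rabs_pos. Qed.

Lemma Rabs_mult_pow2_le (d G C : R) : Rabs G <= C -> Rabs (d ^ 2 * G) <= C * d ^ 2.
Proof.
  intros H. rewrite Rabs_mult, Rmult_comm, (Rabs_pos_eq (d ^ 2)) by apply pow2_ge_0.
  apply Rmult_le_compat_r; auto using pow2_ge_0.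
Qed.

Lemma scaled_lower_bound (c y N q : R) : 0 <= c -> 3/5 <= y <= 6/5 -> 0 <= N -> N / 62 - 2 <= q ->
  c * (5 / 372) * N - c * (10 / 3) <= c * (/ y * q).
Proof.
  intros Hc Hy HN Hq.
  assert (Hu : 5 / 6 <= / y <= 5 / 3).
  { split; apply (Rmult_le_reg_l y); try lra; rewrite Rinv_r by lra; lra. }
  apply Rle_trans with (c * (/ y * (N / 62 - 2))); [| apply Rmult_le_compat_l, Rmult_le_compat_l; lra].
  assert (/ y * (N / 62 - 2) >= 5 / 372 * N - 10 / 3) by nra.
  assert (c * (/ y * (N / 62 - 2) - (5 / 372 * N - 10 / 3)) >= 0) by (apply Rle_ge, Rmult_le_pos; lra).
  lra.
Qed.

Section HexagonalPointY.

Variables (a y0 : R).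
Hypothesis Ha : 0 < a.
Hypothesis Hy0 : 0 < y0.
Hypothesis Hy02 : y0 ^ 2 = 3 / 4.

Lemma y0_bounds : 43 / 50 < y0 < 87 / 100.
Proof. split; nra. Qed.

Lemma near_y0_bounds y : Rabs (y - y0) <= 1 / 4 -> 3 / 5 <= y <= 6 / 5.
Proof. intros H. apply Rabs_le_between in H. pose proof y0_bounds. lra. Qed.

Lemma near_y0_inv_bounds y : Rabs (y - y0) <= 1 / 4 -> 0 < / y <= 5 / 3 /\ 0 < / y0 <= 50 / 43.
Proof.
  intros H. destruct (near_y0_bounds y H). pose proof y0_bounds.
  split; split; try (apply Rinv_0_lt_compat; lra).
  - apply (Rmult_le_reg_l y); [lra |]. rewrite Rinv_r by lra. lra.
  - apply (Rmult_le_reg_l y0); [lra |]. rewrite Rinv_r by lra. lra.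
Qed.

Lemma inv_expansion y : Rabs (y - y0) <= 1 / 4 ->
  Rabs (/ y - / y0) <= 10 * Rabs (y - y0) /\
  Rabs (/ y - / y0 - (- / y0 ^ 2) * (y - y0)) <= 10 * (y - y0) ^ 2.
Proof.
  intros H. destruct (near_y0_bounds y H). destruct (near_y0_inv_bounds y H) as [[U1 U2] [V1 V2]].
  split.
  - replace (/ y - / y0) with ((y - y0) * (- ((/ y) * (/ y0)))) by (field; lra).
    set (u := / y) in *. set (u0 := / y0) in *.
    apply Rabs_mult_le. rewrite Rabs_Ropp, Rabs_pos_eq by nra. nra.
  - replace (/ y - / y0 - - / y0 ^ 2 * (y - y0)) with ((y - y0) ^ 2 * ((/ y) * (/ y0) ^ 2)) by (field; lra).
    set (u := / y) in *. set (u0 := / y0) in *.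
    apply Rabs_mult_pow2_le. rewrite Rabs_pos_eq by nra. nra.
Qed.

Lemma inv_sq_expansion y : Rabs (y - y0) <= 1 / 4 ->
  Rabs (/ y ^ 2 - / y0 ^ 2) <= 10 * Rabs (y - y0) /\
  Rabs (/ y ^ 2 - / y0 ^ 2 - (- 2 / y0 ^ 3) * (y - y0)) <= 30 * (y - y0) ^ 2.
Proof.
  intros H. destruct (near_y0_bounds y H). destruct (near_y0_inv_bounds y H) as [[U1 U2] [V1 V2]].
  pose proof y0_bounds. split.
  - replace (/ y ^ 2 - / y0 ^ 2) with ((y - y0) * (- ((y + y0) * (/ y) ^ 2 * (/ y0) ^ 2))) by (field; lra).
    set (u := / y) in *. set (u0 := / y0) in *.
    apply Rabs_mult_le. rewrite Rabs_Ropp, Rabs_pos_eq by (apply Rmult_le_pos; [apply Rmult_le_pos |]; nra).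
    assert (u ^ 2 <= 25/9) by nra. assert (u0 ^ 2 <= 2500/1849) by nra.
    assert (u ^ 2 * u0 ^ 2 <= 25/9 * (2500/1849)) by (apply Rmult_le_compat; nra). nra.
  - replace (/ y ^ 2 - / y0 ^ 2 - - 2 / y0 ^ 3 * (y - y0))
      with ((y - y0) ^ 2 * ((2 * y + y0) * (/ y) ^ 2 * (/ y0) ^ 3)) by (field; lra).
    set (u := / y) in *. set (u0 := / y0) in *.
    apply Rabs_mult_pow2_le. rewrite Rabs_pos_eq by (apply Rmult_le_pos; [apply Rmult_le_pos |]; simpl; nra).
    assert (u ^ 2 <= 25/9) by nra.
    assert (u0 ^ 3 <= 125000/79507) by (simpl; assert (u0 * u0 <= 2500/1849) by nra; nra).
    assert (u ^ 2 * u0 ^ 3 <= 25/9 * (125000/79507)) by (apply Rmult_le_compat; try nra; simpl; nra).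
    nra.
Qed.

Lemma inv_cube_expansion y : Rabs (y - y0) <= 1 / 4 ->
  Rabs (/ y ^ 3 - / y0 ^ 3) <= 30 * Rabs (y - y0) /\
  Rabs (/ y ^ 3 - / y0 ^ 3 - (- 3 / y0 ^ 4) * (y - y0)) <= 100 * (y - y0) ^ 2.
Proof.
  intros H. destruct (near_y0_bounds y H). destruct (near_y0_inv_bounds y H) as [[U1 U2] [V1 V2]].
  pose proof y0_bounds.
  assert (Hu3 : (/ y) ^ 3 <= 125/27) by (simpl; assert (/ y * / y <= 25/9) by nra; nra).
  assert (Hu03 : (/ y0) ^ 3 <= 125000/79507) by (simpl; assert (/ y0 * / y0 <= 2500/1849) by nra; nra).
  assert (Hu04 : (/ y0) ^ 4 <= (2500/1849) ^ 2).
  { assert ((/ y0) ^ 2 <= 2500/1849) by nra.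
    replace ((/ y0) ^ 4) with ((/ y0) ^ 2 * (/ y0) ^ 2) by ring. nra. }
  assert (0 < (/ y) ^ 3) by (apply pow_lt; lra). assert (0 < (/ y0) ^ 3) by (apply pow_lt; lra).
  assert (0 < (/ y0) ^ 4) by (apply pow_lt; lra).
  split.
  - replace (/ y ^ 3 - / y0 ^ 3) with ((y - y0) * (- ((y ^ 2 + y * y0 + y0 ^ 2) * (/ y) ^ 3 * (/ y0) ^ 3)))
      by (field; lra).
    set (u := / y) in *. set (u0 := / y0) in *.
    apply Rabs_mult_le. rewrite Rabs_Ropp, Rabs_pos_eq by (apply Rmult_le_pos; [apply Rmult_le_pos |]; nra).
    assert (u ^ 3 * u0 ^ 3 <= 125/27 * (125000/79507)) by (apply Rmult_le_compat; lra).
    assert (y ^ 2 + y * y0 + y0 ^ 2 <= 33/10) by nra. rewrite Rmult_assoc.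
    apply Rle_trans with (33/10 * (125/27 * (125000/79507))); [apply Rmult_le_compat; nra | lra].
  - replace (/ y ^ 3 - / y0 ^ 3 - - 3 / y0 ^ 4 * (y - y0))
      with ((y - y0) ^ 2 * ((3 * y ^ 2 + 2 * y * y0 + y0 ^ 2) * (/ y) ^ 3 * (/ y0) ^ 4)) by (field; lra).
    set (u := / y) in *. set (u0 := / y0) in *.
    apply Rabs_mult_pow2_le. rewrite Rabs_pos_eq by (apply Rmult_le_pos; [apply Rmult_le_pos |]; nra).
    assert (u ^ 3 * u0 ^ 4 <= 125/27 * (2500/1849) ^ 2) by (apply Rmult_le_compat; lra).
    assert (3 * y ^ 2 + 2 * y * y0 + y0 ^ 2 <= 72/10) by nra. rewrite Rmult_assoc.
    apply Rle_trans with (72/10 * (125/27 * (2500/1849) ^ 2)); [apply Rmult_le_compat; nra | lra].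
Qed.

(** With [y0^2 = 3/4], [A / y0 + B y0 = (A + 3/4 B) / y0]. *)
Lemma y0_linear_comb_eq A B A' B' :
  A + 3 / 4 * B = A' + 3 / 4 * B' -> A * / y0 + B * y0 = A' * / y0 + B' * y0.
Proof.
  intros H. replace (B * y0) with (y0 ^ 2 * B * / y0) by (field; lra).
  replace (B' * y0) with (y0 ^ 2 * B' * / y0) by (field; lra). rewrite Hy02.
  apply (Rmult_eq_reg_r y0); [| lra]. field_simplify; lra.
Qed.

Lemma inv_y0_sq : / y0 ^ 2 = 4 / 3.
Proof. rewrite Hy02. field. Qed.

Lemma inv_y0_pow4 : / y0 ^ 4 = 16 / 9.
Proof. replace (y0 ^ 4) with ((y0 ^ 2) ^ 2) by ring. rewrite Hy02. field. Qed.

Let gam := PI * a.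

Lemma gam_pos : 0 < gam.
Proof. unfold gam. pose proof PI_RGT_0. nra. Qed.

Let envelope (k l : Z) : R := exp (- (gam * (5 / 372) * sqnorm k l - gam * (10 / 3))).

Lemma gauss_dom_exp_gam (Q W : Z -> Z -> R) :
  (forall k l, gam * (5 / 372) * sqnorm k l - gam * (10 / 3) <= Q k l) -> moderate W ->
  gauss_dom (fun k l => exp (- Q k l) * W k l).
Proof. intros HQ HW. apply (gauss_dom_exp_moderate Q W (gam * (5 / 372)) (gam * (10 / 3))); auto. pose proof gam_pos; lra. Qed.

Lemma gauss_dom_envelope_gam (W : Z -> Z -> R) : moderate W -> gauss_dom (fun k l => envelope k l * W k l).
Proof. intros HW. apply gauss_dom_exp_gam; auto. intros; lra. Qed.

Section ThetaY.

Let m0 (k l : Z) := IZR k + IZR l / 2 + 1 / 2.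
Let w0 (k l : Z) := IZR l + 1 / 2.
Let c0 (k l : Z) := m0 k l ^ 2 - w0 k l / 4.
(** Since [a2 (1/2) y = 1/2 - 1 / (8 y^2)], the exponent is a Laurent polynomial in [y]. *)
Let Qy (y : R) (k l : Z) := gam * (c0 k l * / y + w0 k l ^ 2 * y + 1 / 64 * / y ^ 3).
Let Dd (k l : Z) := gam * (c0 k l * (- / y0 ^ 2) + w0 k l ^ 2 + 1 / 64 * (- 3 / y0 ^ 4)).
Let Dy (k l : Z) := exp (- Qy y0 k l) * (- Dd k l).
Let P1 (k l : Z) := gam * (Rabs (c0 k l) * 10 + w0 k l ^ 2 + 1 / 64 * 30).
Let P2 (k l : Z) := gam * (Rabs (c0 k l) * 10 + 1 / 64 * 100).
Let M (k l : Z) := envelope k l * (P1 k l ^ 2 + P2 k l).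

Lemma theta_term_y_eq y k l : 3 / 5 <= y -> theta_term a (1/2) y (a2 (1/2) y) k l = exp (- Qy y k l).
Proof. intros H. unfold theta_term, Qy, theta_quad, a2, c0, m0, w0, gam. f_equal. field. lra. Qed.

Lemma theta_y_lower_bound y k l : Rabs (y - y0) <= 1 / 4 ->
  gam * (5 / 372) * sqnorm k l - gam * (10 / 3) <= Qy y k l.
Proof.
  intros H. destruct (near_y0_bounds y H) as [Y1 Y2]. pose proof gam_pos.
  replace (Qy y k l) with (gam * (/ y * theta_quad (1/2) y (a2 (1/2) y) (IZR k) (IZR l)))
    by (unfold Qy, theta_quad, a2, c0, m0, w0; field; lra).
  apply scaled_lower_bound; auto using sqnorm_ge0; [lra |].
  assert (Ha2 : 0 <= a2 (1/2) y <= 1/2).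
  { unfold a2. assert (0 < y ^ 2) by nra. split.
    - apply Rmult_le_pos; [nra | left; apply Rinv_0_lt_compat; nra].
    - apply (Rmult_le_reg_r (2 * y ^ 2)); [nra |]. unfold Rdiv. rewrite Rmult_assoc, Rinv_l by nra. nra. }
  apply quad_lower_bound; rewrite ?Rabs_pos_eq; lra || nra.
Qed.

Lemma gauss_dom_theta_term_y y : Rabs (y - y0) <= 1 / 4 -> gauss_dom (theta_term a (1/2) y (a2 (1/2) y)).
Proof.
  intros H. destruct (near_y0_bounds y H).
  apply (gauss_dom_le _ (fun k l => exp (- Qy y k l) * 1)).
  - apply gauss_dom_exp_gam; [intros; apply theta_y_lower_bound; auto | apply moderate_const].
  - intros k l. rewrite theta_term_y_eq, Rmult_1_r by lra. lra.
Qed.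

Lemma theta_y_gauss_dom_Dy : gauss_dom Dy.
Proof.
  apply gauss_dom_exp_gam; [| unfold Dd, c0, m0, w0; solve_moderate].
  intros; apply theta_y_lower_bound; rewrite Rminus_diag_eq, Rabs_R0; lra.
Qed.

Lemma theta_y_gauss_dom_M : gauss_dom M.
Proof. apply gauss_dom_envelope_gam. unfold P1, P2, c0, m0, w0. solve_moderate. Qed.

Lemma theta_y_exponent_increment y k l : Rabs (y - y0) <= 1/4 ->
  Rabs (Qy y k l - Qy y0 k l) <= P1 k l * Rabs (y - y0) /\
  Rabs (Qy y k l - Qy y0 k l - (y - y0) * Dd k l) <= P2 k l * (y - y0) ^ 2.
Proof.
  intros H. pose proof gam_pos.
  destruct (inv_expansion y H) as [A1 A2]. destruct (inv_cube_expansion y H) as [C1 C2].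
  set (dy := y - y0) in *.
  assert (HQ : Qy y k l - Qy y0 k l
             = gam * (c0 k l * (/ y - / y0) + w0 k l ^ 2 * dy + 1 / 64 * (/ y ^ 3 - / y0 ^ 3)))
    by (unfold Qy, dy; ring).
  pose proof (Rabs_pos (c0 k l)). pose proof (pow2_ge_0 (w0 k l)). pose proof (pow2_ge_0 dy).
  split.
  - rewrite HQ, Rabs_mult, (Rabs_pos_eq gam) by lra. unfold P1. rewrite Rmult_assoc.
    apply Rmult_le_compat_l; [lra |].
    eapply Rle_trans; [apply Rabs_triang |]. eapply Rle_trans; [apply Rplus_le_compat_r, Rabs_triang |].
    rewrite !Rabs_mult, (Rabs_pos_eq (1/64)), (Rabs_pos_eq (w0 k l ^ 2)) by lra.
    assert (Rabs (c0 k l) * Rabs (/ y - / y0) <= Rabs (c0 k l) * (10 * Rabs dy)) by (apply Rmult_le_compat_l; auto).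
    nra.
  - replace (Qy y k l - Qy y0 k l - dy * Dd k l)
      with (gam * (c0 k l * (/ y - / y0 - (- / y0 ^ 2) * dy) + 1 / 64 * (/ y ^ 3 - / y0 ^ 3 - (- 3 / y0 ^ 4) * dy)))
      by (rewrite HQ; unfold Dd; ring).
    rewrite Rabs_mult, (Rabs_pos_eq gam) by lra. unfold P2. rewrite Rmult_assoc.
    apply Rmult_le_compat_l; [lra |].
    eapply Rle_trans; [apply Rabs_triang |]. rewrite !Rabs_mult, (Rabs_pos_eq (1/64)) by lra.
    assert (Rabs (c0 k l) * Rabs (/ y - / y0 - - / y0 ^ 2 * dy) <= Rabs (c0 k l) * (10 * dy ^ 2))
      by (apply Rmult_le_compat_l; auto).
    nra.
Qed.

Lemma theta_term_expansion_y y k l : Rabs (y - y0) <= 1/4 ->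
  Rabs (theta_term a (1/2) y (a2 (1/2) y) k l - theta_term a (1/2) y0 (a2 (1/2) y0) k l - (y - y0) * Dy k l)
   <= M k l * (y - y0) ^ 2.
Proof.
  intros H. destruct (near_y0_bounds y H). pose proof y0_bounds.
  destruct (theta_y_exponent_increment y k l H) as [B1 B2]. rewrite <- pow2_abs in B2.
  rewrite !theta_term_y_eq by lra.
  replace (exp (- Qy y k l) - exp (- Qy y0 k l) - (y - y0) * Dy k l)
    with (exp (- Qy y k l) - exp (- Qy y0 k l) + exp (- Qy y0 k l) * ((y - y0) * Dd k l)) by (unfold Dy; ring).
  eapply Rle_trans.
  { apply (exp_neg_expansion _ _ _ (P1 k l) (P2 k l) (Rabs (y - y0)) (envelope k l) (Rabs_pos _) B1 B2);
      apply exp_le.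
    - pose proof (theta_y_lower_bound y k l H). lra.
    - pose proof (theta_y_lower_bound y0 k l ltac:(rewrite Rminus_diag_eq, Rabs_R0; lra)). lra. }
  rewrite pow2_abs. unfold M. right. ring.
Qed.

(** The rotation [(k, l) -> (-k-l-1, k)] of the hexagonal lattice fixes [Qy y0]. *)
Lemma theta_y_z2sum_Dy : z2sum Dy = 0.
Proof.
  apply (z2sum_eq0_rotate (fun k l => exp (- Qy y0 k l)) (fun k l => - Dd k l) (-1));
    [apply theta_y_gauss_dom_Dy | |].
  - intros k l. unfold Qy. do 4 f_equal.
    apply y0_linear_comb_eq. unfold c0, m0, w0. push_IZR. field.
  - intros k l. unfold Dd, c0, m0, w0. rewrite inv_y0_sq. unfold Rdiv. rewrite inv_y0_pow4. push_IZR. field.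
Qed.

Lemma is_derive_theta_y : is_derive (fun y => z2sum (theta_term a (1/2) y (a2 (1/2) y))) y0 0.
Proof.
  rewrite <- theta_y_z2sum_Dy.
  apply (is_derive_z2sum (fun y => theta_term a (1/2) y (a2 (1/2) y)) Dy M y0 (1/4));
    auto using gauss_dom_theta_term_y, theta_y_gauss_dom_Dy, theta_y_gauss_dom_M, theta_term_expansion_y; lra.
Qed.

End ThetaY.

Section HatY.

Let m0 (k l : Z) := IZR k + IZR l / 2.
Let Qy (y : R) (k l : Z) := gam * (m0 k l ^ 2 * / y + IZR l ^ 2 * y).
Let Fy (y : R) (k l : Z) := PI * (m0 k l - IZR l) - PI * m0 k l / 4 * / y ^ 2.
Let DQ (k l : Z) := gam * (m0 k l ^ 2 * (- / y0 ^ 2) + IZR l ^ 2).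
Let DF (k l : Z) := - (PI * m0 k l / 4) * (- 2 / y0 ^ 3).
Let Dy (k l : Z) := exp (- Qy y0 k l) * (- (DQ k l * cos (Fy y0 k l)) - sin (Fy y0 k l) * DF k l).
Let P1 (k l : Z) := gam * (m0 k l ^ 2 * 10 + IZR l ^ 2).
Let P2 (k l : Z) := gam * (m0 k l ^ 2 * 10).
Let R1 (k l : Z) := Rabs (PI * m0 k l / 4) * 10.
Let R2 (k l : Z) := Rabs (PI * m0 k l / 4) * 30.
Let W (k l : Z) := P1 k l ^ 2 + P2 k l + R1 k l ^ 2 + R2 k l + P1 k l * R1 k l.
Let M (k l : Z) := envelope k l * W k l.

Lemma thetahat_term_y_eq y k l : 3 / 5 <= y ->
  thetahat_term a (1/2) y (a2 (1/2) y) k l = exp (- Qy y k l) * cos (Fy y k l).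
Proof.
  intros H. unfold thetahat_term, Qy, Fy, hat_quad, hat_phase, a2, m0, gam.
  f_equal; f_equal; [f_equal |]; field; lra.
Qed.

Lemma hat_y_lower_bound y k l : Rabs (y - y0) <= 1 / 4 ->
  gam * (5 / 372) * sqnorm k l - gam * (10 / 3) <= Qy y k l.
Proof.
  intros H. destruct (near_y0_bounds y H) as [Y1 Y2]. pose proof gam_pos.
  replace (Qy y k l) with (gam * (/ y * ((IZR k + 1/2 * IZR l + 0) ^ 2 + y ^ 2 * (IZR l + 0) ^ 2)))
    by (unfold Qy, m0; field; lra).
  apply scaled_lower_bound; auto using sqnorm_ge0; [lra |].
  apply quad_lower_bound; rewrite ?Rabs_R0, ?Rabs_pos_eq; lra || nra.
Qed.

Lemma hat_y_base_lower_bound k l : gam * (5 / 372) * sqnorm k l - gam * (10 / 3) <= Qy y0 k l.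
Proof. apply hat_y_lower_bound. rewrite Rminus_diag_eq, Rabs_R0; lra. Qed.

Lemma gauss_dom_thetahat_term_y y : Rabs (y - y0) <= 1 / 4 -> gauss_dom (thetahat_term a (1/2) y (a2 (1/2) y)).
Proof.
  intros H. destruct (near_y0_bounds y H).
  apply (gauss_dom_le _ (fun k l => exp (- Qy y k l) * 1)).
  - apply gauss_dom_exp_gam; [intros; apply hat_y_lower_bound; auto | apply moderate_const].
  - intros k l. rewrite thetahat_term_y_eq by lra. rewrite (Rabs_pos_eq (_ * 1))
      by (rewrite Rmult_1_r; apply Rlt_le, exp_pos).
    apply Rabs_exp_cos_le.
Qed.

Lemma Rabs_exp_trig_le Q F u v :
  Rabs (exp (- Q) * (- (u * cos F) - sin F * v)) <= exp (- Q) * (Rabs u + Rabs v).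
Proof.
  rewrite Rabs_mult, Rabs_pos_eq by (apply Rlt_le, exp_pos).
  apply Rmult_le_compat_l; [apply Rlt_le, exp_pos |].
  replace (- (u * cos F) - sin F * v) with (- (u * cos F + sin F * v)) by ring.
  rewrite Rabs_Ropp. apply Rabs_cos_sin_le.
Qed.

Lemma hat_y_gauss_dom_Dy : gauss_dom Dy.
Proof.
  apply (gauss_dom_le _ (fun k l => exp (- Qy y0 k l) * (Rabs (DQ k l) + Rabs (DF k l)))).
  - apply gauss_dom_exp_gam; [apply hat_y_base_lower_bound | unfold DQ, DF, m0; solve_moderate].
  - intros k l. eapply Rle_trans; [apply Rabs_exp_trig_le | apply Rle_abs].
Qed.

Lemma hat_y_gauss_dom_M : gauss_dom M.
Proof. apply gauss_dom_envelope_gam. unfold W, P1, P2, R1, R2, m0. solve_moderate. Qed.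

Lemma hat_y_exponent_increment y k l : Rabs (y - y0) <= 1/4 ->
  Rabs (Qy y k l - Qy y0 k l) <= P1 k l * Rabs (y - y0) /\
  Rabs (Qy y k l - Qy y0 k l - (y - y0) * DQ k l) <= P2 k l * (y - y0) ^ 2.
Proof.
  intros H. pose proof gam_pos. destruct (inv_expansion y H) as [A1 A2].
  set (dy := y - y0) in *.
  assert (HQ : Qy y k l - Qy y0 k l = gam * (m0 k l ^ 2 * (/ y - / y0) + IZR l ^ 2 * dy))
    by (unfold Qy, dy; ring).
  pose proof (pow2_ge_0 (m0 k l)). pose proof (pow2_ge_0 (IZR l)). pose proof (Rabs_pos dy).
  split.
  - rewrite HQ, Rabs_mult, (Rabs_pos_eq gam) by lra. unfold P1. rewrite Rmult_assoc.
    apply Rmult_le_compat_l; [lra |]. eapply Rle_trans; [apply Rabs_triang |].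
    rewrite !Rabs_mult, (Rabs_pos_eq (m0 k l ^ 2)), (Rabs_pos_eq (IZR l ^ 2)) by auto.
    assert (m0 k l ^ 2 * Rabs (/ y - / y0) <= m0 k l ^ 2 * (10 * Rabs dy)) by (apply Rmult_le_compat_l; auto).
    nra.
  - replace (Qy y k l - Qy y0 k l - dy * DQ k l) with (gam * (m0 k l ^ 2 * (/ y - / y0 - (- / y0 ^ 2) * dy)))
      by (rewrite HQ; unfold DQ; ring).
    rewrite Rabs_mult, (Rabs_pos_eq gam) by lra. unfold P2. rewrite Rmult_assoc.
    apply Rmult_le_compat_l; [lra |]. rewrite Rabs_mult, (Rabs_pos_eq (m0 k l ^ 2)) by auto.
    assert (m0 k l ^ 2 * Rabs (/ y - / y0 - - / y0 ^ 2 * dy) <= m0 k l ^ 2 * (10 * dy ^ 2))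
      by (apply Rmult_le_compat_l; auto).
    nra.
Qed.

Lemma hat_y_phase_increment y k l : Rabs (y - y0) <= 1/4 ->
  Rabs (Fy y k l - Fy y0 k l) <= R1 k l * Rabs (y - y0) /\
  Rabs (Fy y k l - Fy y0 k l - (y - y0) * DF k l) <= R2 k l * (y - y0) ^ 2.
Proof.
  intros H. destruct (inv_sq_expansion y H) as [C1 C2].
  assert (HF : Fy y k l - Fy y0 k l = - (PI * m0 k l / 4) * (/ y ^ 2 - / y0 ^ 2)) by (unfold Fy; ring).
  split.
  - rewrite HF, Rabs_mult, Rabs_Ropp. unfold R1. rewrite Rmult_assoc.
    apply Rmult_le_compat_l; [apply Rabs_pos | auto].
  - replace (Fy y k l - Fy y0 k l - (y - y0) * DF k l)
      with (- (PI * m0 k l / 4) * (/ y ^ 2 - / y0 ^ 2 - (- 2 / y0 ^ 3) * (y - y0)))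
      by (rewrite HF; unfold DF; ring).
    rewrite Rabs_mult, Rabs_Ropp. unfold R2. rewrite Rmult_assoc.
    apply Rmult_le_compat_l; [apply Rabs_pos | auto].
Qed.

Lemma thetahat_term_expansion_y y k l : Rabs (y - y0) <= 1/4 ->
  Rabs (thetahat_term a (1/2) y (a2 (1/2) y) k l - thetahat_term a (1/2) y0 (a2 (1/2) y0) k l
        - (y - y0) * Dy k l)
   <= M k l * (y - y0) ^ 2.
Proof.
  intros H. destruct (near_y0_bounds y H). pose proof y0_bounds.
  destruct (hat_y_exponent_increment y k l H) as [B1 B2]. destruct (hat_y_phase_increment y k l H) as [C1 C2].
  rewrite <- pow2_abs in B2, C2.
  rewrite !thetahat_term_y_eq by lra.
  replace (exp (- Qy y k l) * cos (Fy y k l) - exp (- Qy y0 k l) * cos (Fy y0 k l) - (y - y0) * Dy k l) with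
    (exp (- Qy y k l) * cos (Fy y k l) - exp (- Qy y0 k l) * cos (Fy y0 k l)
     - (- exp (- Qy y0 k l) * ((y - y0) * DQ k l) * cos (Fy y0 k l)
        - exp (- Qy y0 k l) * sin (Fy y0 k l) * ((y - y0) * DF k l)))
    by (unfold Dy; ring).
  eapply Rle_trans.
  { apply (exp_neg_cos_expansion _ _ _ (P1 k l) (P2 k l) _ _ _ (R1 k l) (R2 k l) (Rabs (y - y0)) (envelope k l)
      (Rabs_pos _) B1 B2 C1 C2); apply exp_le.
    - pose proof (hat_y_lower_bound y k l H). lra.
    - pose proof (hat_y_base_lower_bound k l). lra. }
  rewrite pow2_abs. unfold M, W. right. ring.
Qed.

Lemma hat_y_Qy_rotate k l : Qy y0 (- k - l + 0)%Z k = Qy y0 k l.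
Proof. unfold Qy. f_equal. apply y0_linear_comb_eq. unfold m0. push_IZR. field. Qed.

Lemma hat_y_Fy_rotate k l : Fy y0 (- k - l + 0)%Z k = Fy y0 k l + 2 * PI * IZR (- k).
Proof. unfold Fy. rewrite inv_y0_sq. unfold m0. push_IZR. field. Qed.

(** The rotation [(k, l) -> (-k-l, k)] fixes [Qy y0] and [Fy y0] modulo [2 pi]. *)
Lemma hat_y_z2sum_Dy : z2sum Dy = 0.
Proof.
  set (w1 := fun k l => exp (- Qy y0 k l) * cos (Fy y0 k l)). set (g1 := fun k l => - DQ k l).
  set (w2 := fun k l => exp (- Qy y0 k l) * sin (Fy y0 k l)). set (g2 := fun k l => - DF k l).
  assert (Hdom : forall (g : Z -> Z -> R) (t : R -> R), moderate g -> (forall F, Rabs (t F) <= 1) ->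
                   gauss_dom (fun k l => exp (- Qy y0 k l) * t (Fy y0 k l) * g k l)).
  { intros g t Hg Ht. apply (gauss_dom_le _ (fun k l => exp (- Qy y0 k l) * Rabs (g k l))).
    - apply gauss_dom_exp_gam; [apply hat_y_base_lower_bound | apply moderate_abs; auto].
    - intros k l. rewrite !Rabs_mult, Rabs_Rabsolu, (Rabs_pos_eq (exp _)) by (apply Rlt_le, exp_pos).
      rewrite Rmult_assoc. apply Rmult_le_compat_l; [apply Rlt_le, exp_pos |].
      specialize (Ht (Fy y0 k l)). pose proof (Rabs_pos (g k l)). pose proof (Rabs_pos (t (Fy y0 k l))). nra. }
  assert (H1 : gauss_dom (fun k l => w1 k l * g1 k l))
    by (apply (Hdom g1 cos); [unfold g1, DQ, m0; solve_moderate | intro; apply Rabs_le, COS_bound]).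
  assert (H2 : gauss_dom (fun k l => w2 k l * g2 k l))
    by (apply (Hdom g2 sin); [unfold g2, DF, m0; solve_moderate | intro; apply Rabs_le, SIN_bound]).
  rewrite (z2sum_ext _ (fun k l => w1 k l * g1 k l + w2 k l * g2 k l)) by (intros; unfold Dy, w1, w2, g1, g2; ring).
  rewrite z2sum_plus by auto.
  rewrite (z2sum_eq0_rotate w1 g1 0 H1), (z2sum_eq0_rotate w2 g2 0 H2); [ring | ..].
  - intros k l. unfold w2. rewrite hat_y_Qy_rotate, hat_y_Fy_rotate, sin_shift_2PI. auto.
  - intros k l. unfold g2, DF, m0. push_IZR. field. lra.
  - intros k l. unfold w1. rewrite hat_y_Qy_rotate, hat_y_Fy_rotate, cos_shift_2PI. auto.
  - intros k l. unfold g1, DQ, m0. rewrite inv_y0_sq. push_IZR. field.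
Qed.

Lemma is_derive_thetahat_y : is_derive (fun y => z2sum (thetahat_term a (1/2) y (a2 (1/2) y))) y0 0.
Proof.
  rewrite <- hat_y_z2sum_Dy.
  apply (is_derive_z2sum (fun y => thetahat_term a (1/2) y (a2 (1/2) y)) Dy M y0 (1/4));
    auto using gauss_dom_thetahat_term_y, hat_y_gauss_dom_Dy, hat_y_gauss_dom_M, thetahat_term_expansion_y; lra.
Qed.

End HatY.

End HexagonalPointY.

Lemma is_derive_ext_pos (f g : R -> R) y0 l :
  0 < y0 -> (forall y, 0 < y -> g y = f y) -> is_derive g y0 l -> is_derive f y0 l.
Proof.
  intros Hy0 Hfg. apply is_derive_ext_loc.
  assert (Hd : 0 < y0 / 2) by lra. exists (mkposreal _ Hd). intros t Ht. apply Hfg.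
  change (Rabs (t - y0) < y0 / 2) in Ht. apply Rabs_def2 in Ht. lra.
Qed.

Lemma is_derive_zero (x : R) : is_derive (fun _ => 0) x 0.
Proof. apply is_derive_Reals, derivable_pt_lim_const. Qed.

Theorem lemma4p2 (c1 c2 : R -> R -> R) :
  (forall x y, 0 < y -> differentiable_pt c1 x y /\ differentiable_pt c2 x y) ->
  (forall y, 0 < y -> c1 (1/2) y = a1 (1/2) y /\ c2 (1/2) y = a2 (1/2) y) ->
  (forall x y, 0 < y -> c1 x y + x * c2 x y = 1/2) ->
  (forall y, 0 < y -> is_derive (fun x => c2 x y) (1/2) 0) ->
  forall alpha : R, 0 < alpha ->
  let F := fun x y => theta x y (c1 x y) (c2 x y) alpha in
  let G := fun x y => thetahat_re x y (c1 x y) (c2 x y) alpha in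
  let H := fun x y => thetahat_im x y (c1 x y) (c2 x y) alpha in
  let y0 := sqrt 3 / 2 in
  (is_derive (fun x => F x y0) (1/2) 0 /\ is_derive (fun y => F (1/2) y) y0 0) /\
  (is_derive (fun x => G x y0) (1/2) 0 /\ is_derive (fun y => G (1/2) y) y0 0) /\
  (is_derive (fun x => H x y0) (1/2) 0 /\ is_derive (fun y => H (1/2) y) y0 0).
Proof.
  intros _ Hc Hline Hder alpha Halpha F G H y0.
  assert (Hy0 : 0 < y0) by (unfold y0; pose proof (sqrt_lt_R0 3); lra).
  assert (Hy02 : y0 ^ 2 = 3 / 4)
    by (unfold y0; replace ((sqrt 3 / 2) ^ 2) with (sqrt 3 * sqrt 3 / 4) by field; rewrite sqrt_sqrt; lra).
  assert (Hc2 : c2 (1/2) y0 = 1/3) by (rewrite (proj2 (Hc y0 Hy0)); unfold a2; rewrite Hy02; field).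
  assert (Ha : forall y, 0 < y -> a1 (1/2) y + 1/2 * a2 (1/2) y = 1/2) by (intros; unfold a1, a2; field; lra).
  split; [split | split; [split | split]].
  - apply (is_derive_ext (fun x => z2sum (theta_term alpha x y0 (c2 x y0)))); [| apply is_derive_theta_x; auto].
    intro x. unfold F. rewrite (theta_as_z2sum _ _ _ (c1 x y0)); auto.
  - apply (is_derive_ext_pos _ (fun y => z2sum (theta_term alpha (1/2) y (a2 (1/2) y)))); auto.
    + intros y Hy. unfold F. destruct (Hc y Hy) as [-> ->]. rewrite (theta_as_z2sum _ _ _ (a1 (1/2) y)); auto.
    + apply is_derive_theta_y; auto.
  - apply (is_derive_ext (fun x => z2sum (thetahat_term alpha x y0 (c2 x y0)))); [| apply is_derive_thetahat_x; auto].
    intro x. unfold G. rewrite (thetahat_re_as_z2sum _ _ _ (c1 x y0)); auto.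
  - apply (is_derive_ext_pos _ (fun y => z2sum (thetahat_term alpha (1/2) y (a2 (1/2) y)))); auto.
    + intros y Hy. unfold G. destruct (Hc y Hy) as [-> ->]. rewrite (thetahat_re_as_z2sum _ _ _ (a1 (1/2) y)); auto.
    + apply is_derive_thetahat_y; auto.
  - apply (is_derive_ext (fun _ => 0)); [| apply is_derive_zero].
    intro x. unfold H. rewrite thetahat_im_eq0; auto.
  - apply (is_derive_ext_pos _ (fun _ => 0)); [auto | | apply is_derive_zero].
    intros y Hy. unfold H. rewrite thetahat_im_eq0; auto.
Qed.
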